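(* Let $(p_j)_{j\ge1}$, with $p_j\in[0,1]$ and $\sum_j p_j<\infty$, be regularly varying with index $\alpha\in(0,1)$ and slowly varying function $\ell$. Then for every fixed $r\ge1$, as $n\to+\infty$, $$\mathbb{E}[K_{n,r}]\simeq \frac{\alpha\,\Gamma(r-\alpha)}{r!}\,n^\alpha\ell(n),$$ where $\Gamma$ is the Gamma function and $f\simeq g$ means $f/g\to1$.
   Context: Bernoulli product feature model: observations $Y_1,Y_2,\dots$ are i.i.d., each $Y_i=(Y_{i,j})_{j\ge1}$ a sequence of independent Bernoulli$(p_j)$ random variables; $X_{n,j}=\sum_{i=1}^nY_{i,j}$, and $K_{n,r}=\sum_{j\ge1}\mathbf{1}\{X_{n,j}=r\}$. Regular variation: let $\overline{\nu}(x):=\#\{j\ge1: p_j\ge x\}$ for $x\in(0,1]$. The sequence $(p_j)$ is regularly varying with index $\alpha\in(0,1)$ if $\overline{\nu}(x)\simeq x^{-\alpha}\ell(1/x)$ as $x\downarrow0$, where $\ell$ is slowly varying, i.e. $\ell(ct)/\ell(t)\to1$ as $t\to+\infty$ for every $c>0$. *)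

From Stdlib Require Import Reals Lra Arith.
Open Scope R_scope.

(* Features are indexed by j : nat starting at 0 (p 0 plays the role of p_1). *)

Fixpoint cnt (p : nat -> R) (x : R) (M : nat) : nat :=
  match M with
  | O => O
  | S m => (cnt p x m + (if Rle_dec x (p m) then 1 else 0))%nat
  end.

(* nubar(x) = #{ j : p_j >= x } equals N (N is well defined when only finitely
   many p_j are >= x, e.g. when sum p_j < oo and x > 0). *)
Definition nubar_is (p : nat -> R) (x : R) (N : nat) : Prop :=
  exists M : nat, (forall j, (M <= j)%nat -> p j < x) /\ cnt p x M = N.

Definition slowly_varying (l : R -> R) : Prop :=
  forall c, 0 < c -> forall eps, 0 < eps -> exists T, forall t, T < t ->
    Rabs (l (c * t) / l t - 1) < eps.

Definition regularly_varying (p : nat -> R) (alpha : R) (l : R -> R) : Prop :=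
  slowly_varying l /\
  forall eps, 0 < eps -> exists d, 0 < d /\ forall x, 0 < x < d ->
    forall N, nubar_is p x N ->
      Rabs (INR N / (Rpower x (- alpha) * l (1 / x)) - 1) < eps.

Definition is_Gamma (s g : R) : Prop :=
  forall eps, 0 < eps -> exists d, 0 < d /\ exists M, 0 < M /\
    forall a b, 0 < a -> a < d -> M < b -> a < b ->
      exists pr : Riemann_integrable (fun t => Rpower t (s - 1) * exp (- t)) a b,
        Rabs (RiemannInt pr - g) < eps.

(* E[1{X_{n,j} = r}] = P(Binomial(n, p_j) = r) *)
Definition binom_pmf (n r : nat) (q : R) : R :=
  if (r <=? n)%nat then C n r * q ^ r * (1 - q) ^ (n - r) else 0.

(* E[K_{n,r}] = sum_j P(Bin(n, p_j) = r), and for p_j = t / n this term is close to the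
   Poisson weight t^r e^{-t} / r!.  On a grid a = u_0 < ... < u_m = b the sum over the p_j in
   [a / n, b / n) is therefore sandwiched, up to factors tending to 1, between Riemann-Stieltjes
   sums  sum_i u_i^r e^{-u_i} / r! (nubar(u_i / n) - nubar(u_{i+1} / n)).  Divided by
   n^alpha l(n), regular variation turns nubar(u / n) into u^{-alpha}, so these sums tend to
   (alpha / r!) int_a^b t^{r - alpha - 1} e^{-t} dt, which is close to alpha Gamma(r - alpha) / r!
   for a small and b large.  The p_j below a / n contribute O(a^{r - alpha}) by a Potter bound
   nubar(x / 2) <= q nubar(x) with q < 2, and those above b / n contribute O(b^{-1-alpha}). *)

From Stdlib Require Import Reals Arith Lra Lia ClassicalEpsilon.
From Coquelicot Require Import Coquelicot.
Open Scope R_scope.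

Fixpoint sum_lt (f : nat -> R) (M : nat) : R :=
  match M with O => 0 | S m => sum_lt f m + f m end.

Lemma sum_lt_add f g M : sum_lt (fun j => f j + g j) M = sum_lt f M + sum_lt g M.
Proof. induction M; simpl; lra. Qed.

Lemma sum_lt_sub f g M : sum_lt (fun j => f j - g j) M = sum_lt f M - sum_lt g M.
Proof. induction M; simpl; lra. Qed.

Lemma sum_lt_scal k f M : sum_lt (fun j => k * f j) M = k * sum_lt f M.
Proof. induction M; simpl; [ring | rewrite IHM; ring]. Qed.

Lemma sum_lt_const k M : sum_lt (fun _ => k) M = INR M * k.
Proof. induction M; [simpl; ring |]. simpl sum_lt. rewrite IHM, S_INR. ring. Qed.

Lemma sum_lt_le f g M :
  (forall j, (j < M)%nat -> f j <= g j) -> sum_lt f M <= sum_lt g M.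
Proof.
  induction M; simpl; intros H; [lra |].
  assert (sum_lt f M <= sum_lt g M) by (apply IHM; intros; apply H; lia).
  assert (f M <= g M) by (apply H; lia). lra.
Qed.

Lemma sum_lt_ext f g M :
  (forall j, (j < M)%nat -> f j = g j) -> sum_lt f M = sum_lt g M.
Proof.
  intros H. apply Rle_antisym; apply sum_lt_le; intros j hj; rewrite H by exact hj; lra.
Qed.

Lemma sum_lt_swap (F : nat -> nat -> R) m M :
  sum_lt (fun j => sum_lt (fun i => F i j) m) M =
  sum_lt (fun i => sum_lt (fun j => F i j) M) m.
Proof.
  induction M; simpl.
  - induction m; simpl; lra.
  - rewrite IHM, <- sum_lt_add. reflexivity.
Qed.

Lemma sum_f_R0_sum_lt f N : sum_f_R0 f N = sum_lt f (S N).
Proof. induction N; simpl; [lra |]. rewrite IHN. reflexivity. Qed.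

Definition one_le (x q : R) : R := if Rle_dec x q then 1 else 0.

Lemma INR_cnt p x M : INR (cnt p x M) = sum_lt (fun j => one_le x (p j)) M.
Proof.
  induction M; simpl; [reflexivity |].
  rewrite plus_INR, IHM. unfold one_le; destruct Rle_dec; simpl; lra.
Qed.

Lemma cnt_mono p x M M' : (M <= M')%nat -> (cnt p x M <= cnt p x M')%nat.
Proof. intros H; induction H; simpl; lia. Qed.

Lemma cnt_stable p x M M' :
  (forall j, (M <= j)%nat -> p j < x) -> (M <= M')%nat -> cnt p x M' = cnt p x M.
Proof.
  intros H HM; induction HM; simpl; [reflexivity |].
  rewrite IHHM. destruct Rle_dec as [h | h]; [| lia].
  specialize (H m HM). lra.
Qed.

Lemma cutoff_exists (p : nat -> R) : (exists S, infinite_sum p S) ->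
  exists cut : R -> nat, forall x, 0 < x -> forall j, (cut x <= j)%nat -> p j < x.
Proof.
  intros [Sp HS].
  assert (H : forall x, exists M, 0 < x -> forall j, (M <= j)%nat -> p j < x).
  { intros x. destruct (Rlt_dec 0 x) as [hx | hx]; [| exists O; intros; lra].
    destruct (HS (x / 2)) as [N HN]; [lra |].
    exists (S N). intros _ j Hj. destruct j; [lia |].
    assert (h1 := HN (S j) ltac:(lia)). assert (h2 := HN j ltac:(lia)).
    unfold R_dist in *. simpl in h1.
    apply Rabs_def2 in h1. apply Rabs_def2 in h2. lra. }
  exists (fun x => proj1_sig (constructive_indefinite_description _ (H x))).
  intros x hx. destruct (constructive_indefinite_description _ (H x)) as [M HM]. auto.
Qed.

Lemma exp_monotone x y : x <= y -> exp x <= exp y.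
Proof. intros h. destruct (Req_dec x y) as [-> | e]; [lra | left; apply exp_increasing; lra]. Qed.

Lemma exp_pow x n : exp x ^ n = exp (INR n * x).
Proof.
  induction n; [simpl; rewrite Rmult_0_l, exp_0; reflexivity |].
  rewrite S_INR. simpl pow. rewrite IHn, <- exp_plus. f_equal. ring.
Qed.

Lemma pow_le_one x n : 0 <= x <= 1 -> x ^ n <= 1.
Proof. intros h. rewrite <- (pow1 n). apply pow_incr; lra. Qed.

Lemma Rpower_pos x y : 0 < Rpower x y.
Proof. apply exp_pos. Qed.

Lemma Rpower_one_l y : Rpower 1 y = 1.
Proof. unfold Rpower. rewrite ln_1, Rmult_0_r. apply exp_0. Qed.

Lemma pow_div_le_exp y K : 0 <= y -> (1 <= K)%nat -> (y / INR K) ^ K <= exp y.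
Proof.
  intros hy hK. assert (hK' : 0 < INR K) by (apply lt_0_INR; lia).
  replace (exp y) with (exp (y / INR K) ^ K) by (rewrite exp_pow; f_equal; field; lra).
  apply pow_incr. split; [apply Rdiv_le_0_compat; lra |].
  generalize (exp_ineq1_le (y / INR K)). lra.
Qed.

Lemma bernoulli_ineq y n : -1 <= y -> 1 + INR n * y <= (1 + y) ^ n.
Proof.
  intros hy. induction n; [simpl; lra |].
  rewrite S_INR. change ((1 + y) ^ S n) with ((1 + y) * (1 + y) ^ n).
  assert (0 <= INR n) by apply pos_INR.
  assert ((1 + y) * (1 + INR n * y) <= (1 + y) * (1 + y) ^ n)
    by (apply Rmult_le_compat_l; lra).
  assert (0 <= INR n * (y * y)) by (apply Rmult_le_pos; [lra | apply Rle_0_sqr]).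
  nra.
Qed.

Lemma one_sub_le_exp q : 1 - q <= exp (- q).
Proof. generalize (exp_ineq1_le (- q)); lra. Qed.

Lemma exp_opp_one_sub_sqr_le q : q <= 1 -> exp (- q) * (1 - q ^ 2) <= 1 - q.
Proof.
  intros hq. generalize (exp_ineq1_le q); intros h.
  assert (he : exp (- q) * exp q = 1)
    by (rewrite <- exp_plus, Rplus_opp_l; apply exp_0).
  assert (0 < exp (- q)) by apply exp_pos.
  assert (exp (- q) * ((1 + q) * (1 - q)) <= exp (- q) * (exp q * (1 - q))).
  { apply Rmult_le_compat_l; [lra |]. apply Rmult_le_compat_r; lra. }
  simpl. nra.
Qed.

Lemma fact_quot_bounds k r :
  INR k ^ r <= INR (fact (k + r)) / INR (fact k) <= INR (k + r) ^ r.
Proof.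
  assert (hk : 0 < INR (fact k)) by apply INR_fact_lt_0.
  induction r as [| r [h1 h2]].
  - rewrite Nat.add_0_r. simpl. split; right; field; lra.
  - replace (k + S r)%nat with (S (k + r)) by lia.
    rewrite fact_simpl, mult_INR.
    replace (INR (S (k + r)) * INR (fact (k + r)) / INR (fact k))
      with (INR (S (k + r)) * (INR (fact (k + r)) / INR (fact k))) by (field; lra).
    change (INR k ^ S r) with (INR k * INR k ^ r).
    change (INR (S (k + r)) ^ S r) with (INR (S (k + r)) * INR (S (k + r)) ^ r).
    assert (0 <= INR k) by apply pos_INR.
    assert (INR k <= INR (S (k + r))) by (apply le_INR; lia).
    assert (INR (k + r) <= INR (S (k + r))) by (apply le_INR; lia).
    assert (0 <= INR k ^ r) by (apply pow_le; lra).
    split; [apply Rmult_le_compat; auto |].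
    apply Rmult_le_compat_l; [lra |]. eapply Rle_trans; [exact h2 |].
    apply pow_incr. split; [apply pos_INR | lra].
Qed.

(** * Binomial probabilities *)

Definition poisson_kernel (r : nat) (t : R) : R := t ^ r * exp (- t).

Lemma poisson_kernel_nonneg r t : 0 <= t -> 0 <= poisson_kernel r t.
Proof. intros. apply Rmult_le_pos; [apply pow_le; lra | left; apply exp_pos]. Qed.

Lemma binom_pmf_shift k r q : binom_pmf (k + r) r q =
  (INR (fact (k + r)) / INR (fact k)) / INR (fact r) * q ^ r * (1 - q) ^ k.
Proof.
  unfold binom_pmf, Binomial.C. rewrite (proj2 (Nat.leb_le r (k + r))) by lia.
  replace (k + r - r)%nat with k by lia.
  assert (INR (fact k) <> 0) by apply INR_fact_neq_0.
  assert (INR (fact r) <> 0) by apply INR_fact_neq_0.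
  field; auto.
Qed.

Lemma binom_pmf_nonneg n r q : 0 <= q <= 1 -> 0 <= binom_pmf n r q.
Proof.
  intros hq. unfold binom_pmf. destruct (r <=? n)%nat; [| lra].
  unfold Binomial.C.
  assert (0 < INR (fact n)) by apply INR_fact_lt_0.
  assert (0 < INR (fact r)) by apply INR_fact_lt_0.
  assert (0 < INR (fact (n - r))) by apply INR_fact_lt_0.
  apply Rmult_le_pos; [apply Rmult_le_pos | apply pow_le; lra].
  - left; apply Rdiv_lt_0_compat; [lra | apply Rmult_lt_0_compat; lra].
  - apply pow_le; lra.
Qed.

Lemma binom_pmf_lt n r q : (n < r)%nat -> binom_pmf n r q = 0.
Proof. intros h. unfold binom_pmf. replace (r <=? n)%nat with false; [reflexivity |].
  symmetry; apply Nat.leb_gt; lia. Qed.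

Lemma binom_pmf_upper k r q : 0 <= q <= 1 ->
  binom_pmf (k + r) r q <= (INR (k + r) * q) ^ r / INR (fact r) * exp (- (q * INR k)).
Proof.
  intros hq. rewrite binom_pmf_shift, Rpow_mult_distr.
  destruct (fact_quot_bounds k r) as [_ hF].
  assert (0 < INR (fact r)) by apply INR_fact_lt_0.
  assert (0 <= INR (fact (k + r)) / INR (fact k))
    by (apply Rdiv_le_0_compat; [apply pos_INR | apply INR_fact_lt_0]).
  assert (hB : (1 - q) ^ k <= exp (- (q * INR k))).
  { replace (- (q * INR k)) with (INR k * - q) by ring. rewrite <- exp_pow.
    apply pow_incr. generalize (one_sub_le_exp q); lra. }
  assert (0 <= (1 - q) ^ k) by (apply pow_le; lra).
  assert (0 < INR (fact k)) by apply INR_fact_lt_0.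
  assert (0 <= q ^ r / INR (fact r)) by (apply Rdiv_le_0_compat; [apply pow_le |]; lra).
  replace (INR (fact (k + r)) / INR (fact k) / INR (fact r) * q ^ r * (1 - q) ^ k)
    with (q ^ r / INR (fact r) * (INR (fact (k + r)) / INR (fact k) * (1 - q) ^ k)) by (field; lra).
  replace (INR (k + r) ^ r * q ^ r / INR (fact r) * exp (- (q * INR k)))
    with (q ^ r / INR (fact r) * (INR (k + r) ^ r * exp (- (q * INR k)))) by (field; lra).
  apply Rmult_le_compat_l; [lra |]. apply Rmult_le_compat; lra.
Qed.

Lemma binom_pmf_lower k r q : 0 <= q <= 1 ->
  (INR k * q) ^ r / INR (fact r) * (exp (- (INR (k + r) * q)) * (1 - INR (k + r) * q ^ 2))
  <= binom_pmf (k + r) r q.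
Proof.
  intros hq. rewrite binom_pmf_shift, Rpow_mult_distr.
  destruct (fact_quot_bounds k r) as [hF _].
  assert (0 < INR (fact r)) by apply INR_fact_lt_0.
  (* (1 - q) ^ k >= (e ^ (- q) (1 - q ^ 2)) ^ (k + r) >= e ^ (- N q) (1 - N q ^ 2) by Bernoulli. *)
  assert (hA : exp (- (INR (k + r) * q)) * (1 - INR (k + r) * q ^ 2) <= (1 - q) ^ k).
  { assert (e1 : (1 - q) ^ (k + r) <= (1 - q) ^ k).
    { rewrite pow_add. assert (0 <= (1 - q) ^ k) by (apply pow_le; lra).
      assert ((1 - q) ^ r <= 1) by (apply pow_le_one; lra). nra. }
    assert (e2 : (exp (- q) * (1 - q ^ 2)) ^ (k + r) <= (1 - q) ^ (k + r)).
    { apply pow_incr. split; [| apply exp_opp_one_sub_sqr_le; lra].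
      apply Rmult_le_pos; [left; apply exp_pos | simpl; nra]. }
    rewrite Rpow_mult_distr, exp_pow in e2.
    assert (e3 : 1 + INR (k + r) * - q ^ 2 <= (1 + - q ^ 2) ^ (k + r))
      by (apply bernoulli_ineq; simpl; nra).
    assert (0 < exp (INR (k + r) * - q)) by apply exp_pos.
    replace (- (INR (k + r) * q)) with (INR (k + r) * - q) by ring.
    replace (1 - q ^ 2) with (1 + - q ^ 2) in e2 by ring.
    assert (exp (INR (k + r) * - q) * (1 + INR (k + r) * - q ^ 2)
            <= exp (INR (k + r) * - q) * (1 + - q ^ 2) ^ (k + r))
      by (apply Rmult_le_compat_l; lra).
    lra. }
  assert (0 <= q ^ r) by (apply pow_le; lra).
  assert (0 <= INR k ^ r) by (apply pow_le, pos_INR).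
  assert (0 < / INR (fact r)) by (apply Rinv_0_lt_compat; lra).
  assert (0 <= (1 - q) ^ k) by (apply pow_le; lra).
  set (F := INR (fact (k + r)) / INR (fact k)) in *.
  set (E := exp (- (INR (k + r) * q)) * (1 - INR (k + r) * q ^ 2)) in *.
  set (B := (1 - q) ^ k) in *.
  clearbody F E B. unfold Rdiv.
  replace (F * / INR (fact r) * q ^ r * B) with (F * q ^ r * / INR (fact r) * B) by ring.
  assert (0 <= F * q ^ r * / INR (fact r) * B) by (repeat apply Rmult_le_pos; lra).
  assert (0 <= INR k ^ r * q ^ r * / INR (fact r)) by (repeat apply Rmult_le_pos; lra).
  destruct (Rle_dec 0 E) as [hE | hE]; [| nra].
  apply Rmult_le_compat; try lra.
  apply Rmult_le_compat_r; [lra |]. apply Rmult_le_compat_r; lra.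
Qed.

Lemma binom_pmf_le_kernel k r q : 0 <= q <= 1 ->
  binom_pmf (k + r) r q <= poisson_kernel r (INR (k + r) * q) / INR (fact r) * exp (q * INR r).
Proof.
  intros hq. eapply Rle_trans; [apply binom_pmf_upper; auto |].
  right. unfold poisson_kernel. rewrite plus_INR.
  replace (- (q * INR k)) with (- ((INR k + INR r) * q) + q * INR r) by ring.
  rewrite exp_plus. field. apply INR_fact_neq_0.
Qed.

Lemma binom_pmf_le_pow k r q : 0 <= q <= 1 ->
  binom_pmf (k + r) r q <= INR (k + r) ^ r / INR (fact r) * q ^ r.
Proof.
  intros hq. eapply Rle_trans; [apply binom_pmf_upper; auto |].
  assert (0 <= INR k) by apply pos_INR.
  assert (exp (- (q * INR k)) <= 1) by (rewrite <- exp_0; apply exp_monotone; nra).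
  assert (0 <= (INR (k + r) * q) ^ r / INR (fact r)).
  { apply Rdiv_le_0_compat; [| apply INR_fact_lt_0].
    apply pow_le, Rmult_le_pos; [apply pos_INR | lra]. }
  replace (INR (k + r) ^ r / INR (fact r) * q ^ r)
    with ((INR (k + r) * q) ^ r / INR (fact r) * 1) by (rewrite Rpow_mult_distr; field; apply INR_fact_neq_0).
  apply Rmult_le_compat_l; auto.
Qed.

(* Far in the tail the factor exp (- t / 2) beats t ^ (r + 1), so the pmf decays like 1 / t. *)
Lemma binom_pmf_le_inv k r q b : 0 <= q <= 1 -> (r <= k)%nat -> 0 < b <= INR (k + r) * q ->
  binom_pmf (k + r) r q <= INR (2 * r + 2) ^ (r + 1) / (INR (fact r) * b).
Proof.
  intros hq hk hb. eapply Rle_trans; [apply binom_pmf_upper; auto |].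
  set (t := INR (k + r) * q) in *.
  assert (hkr : INR (k + r) <= 2 * INR k) by (rewrite plus_INR; apply le_INR in hk; lra).
  assert (e1 : exp (- (q * INR k)) <= exp (- (t / 2))) by (apply exp_monotone; unfold t; nra).
  assert (hK : 0 < INR (r + 1)) by (apply lt_0_INR; lia).
  assert (e2 : (t / 2 / INR (r + 1)) ^ (r + 1) <= exp (t / 2)) by (apply pow_div_le_exp; lia || lra).
  assert (hp : 0 < (t / 2 / INR (r + 1)) ^ (r + 1)) by (apply pow_lt, Rdiv_lt_0_compat; lra).
  assert (e3 : exp (- (t / 2)) <= / (t / 2 / INR (r + 1)) ^ (r + 1))
    by (rewrite exp_Ropp; apply Rinv_le_contravar; auto).
  assert (e4 : t ^ r * / (t / 2 / INR (r + 1)) ^ (r + 1) = INR (2 * r + 2) ^ (r + 1) / t).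
  { replace (INR (2 * r + 2)) with (2 * INR (r + 1)) by (rewrite !plus_INR, mult_INR; simpl; ring).
    unfold Rdiv. rewrite !Rpow_mult_distr, !pow_inv, pow_add. simpl. field.
    repeat split; try lra; apply pow_nonzero; lra. }
  assert (hf := INR_fact_lt_0 r).
  assert (0 <= t ^ r) by (apply pow_le; lra).
  assert (h1 : t ^ r / INR (fact r) * exp (- (q * INR k))
               <= / INR (fact r) * (t ^ r * / (t / 2 / INR (r + 1)) ^ (r + 1))).
  { replace (/ INR (fact r) * (t ^ r * / (t / 2 / INR (r + 1)) ^ (r + 1)))
      with (t ^ r / INR (fact r) * / (t / 2 / INR (r + 1)) ^ (r + 1)) by (field; lra).
    apply Rmult_le_compat_l; [apply Rdiv_le_0_compat |]; lra. }
  rewrite e4 in h1.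
  eapply Rle_trans; [exact h1 |].
  replace (INR (2 * r + 2) ^ (r + 1) / (INR (fact r) * b))
    with (/ INR (fact r) * (INR (2 * r + 2) ^ (r + 1) / b)) by (field; lra).
  apply Rmult_le_compat_l; [left; apply Rinv_0_lt_compat; lra |].
  unfold Rdiv. apply Rmult_le_compat_l; [apply pow_le, pos_INR |]. apply Rinv_le_contravar; lra.
Qed.

Lemma kernel_le_binom_pmf k r q : 0 <= q <= 1 -> (0 < k + r)%nat ->
  (INR k / INR (k + r)) ^ r * (1 - INR (k + r) * q ^ 2) * poisson_kernel r (INR (k + r) * q)
    / INR (fact r) <= binom_pmf (k + r) r q.
Proof.
  intros hq hn. eapply Rle_trans; [| apply binom_pmf_lower; auto].
  right. unfold poisson_kernel. assert (0 < INR (k + r)) by (apply lt_0_INR; lia).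
  rewrite !Rpow_mult_distr. unfold Rdiv. rewrite Rpow_mult_distr, pow_inv.
  field. split; [apply INR_fact_neq_0 | apply pow_nonzero; lra].
Qed.

(** * Truncated Gamma integrals *)

Definition gamma_integrand (s t : R) : R := Rpower t (s - 1) * exp (- t).

Definition gamma_int (s a b : R) : R := RInt (gamma_integrand s) a b.

Lemma Rpower_continuous y t : 0 < t -> continuous (fun x => Rpower x y) t.
Proof.
  intros ht. apply (@ex_derive_continuous R_AbsRing R_NormedModule).
  unfold Rpower. auto_derive. lra.
Qed.

Lemma gamma_integrand_pos s t : 0 < gamma_integrand s t.
Proof. apply Rmult_lt_0_compat; apply exp_pos. Qed.

Lemma ex_RInt_gamma s a b : 0 < a -> 0 < b -> ex_RInt (gamma_integrand s) a b.
Proof.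
  intros ha hb. apply (@ex_RInt_continuous R_CompleteNormedModule). intros z hz.
  assert (0 < Rmin a b) by (apply Rmin_glb_lt; auto).
  apply (@ex_derive_continuous R_AbsRing R_NormedModule).
  unfold gamma_integrand, Rpower. auto_derive. lra.
Qed.

Lemma ex_RInt_Rpower c y a b : 0 < a -> 0 < b -> ex_RInt (fun t => c * Rpower t y) a b.
Proof.
  intros ha hb. apply (@ex_RInt_continuous R_CompleteNormedModule). intros z hz.
  assert (0 < Rmin a b) by (apply Rmin_glb_lt; auto).
  apply (@ex_derive_continuous R_AbsRing R_NormedModule).
  unfold Rpower. auto_derive. lra.
Qed.

Lemma is_RInt_Rpower y u v : y <> 0 -> 0 < u -> 0 < v ->
  is_RInt (fun t => Rpower t (y - 1)) u v ((Rpower v y - Rpower u y) / y).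
Proof.
  intros hy hu hv.
  replace ((Rpower v y - Rpower u y) / y) with (minus (/ y * Rpower v y) (/ y * Rpower u y))
    by (unfold minus, plus, opp; simpl; field; auto).
  apply (is_RInt_derive (fun t => / y * Rpower t y)); intros x hx;
    assert (hx0 : 0 < x) by (assert (0 < Rmin u v) by (apply Rmin_glb_lt; auto); lra).
  - assert (h := derivable_pt_lim_power x y hx0). apply is_derive_Reals in h.
    apply (is_derive_scal _ _ (/ y)) in h.
    replace (Rpower x (y - 1)) with (/ y * (y * Rpower x (y - 1))) by (field; auto). exact h.
  - apply Rpower_continuous. lra.
Qed.

Lemma RInt_Rpower c y u v : y <> 0 -> 0 < u -> 0 < v ->
  RInt (fun t => c * Rpower t (y - 1)) u v = c * ((Rpower v y - Rpower u y) / y).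
Proof.
  intros hy hu hv. apply is_RInt_unique.
  exact (is_RInt_scal _ _ _ c _ (is_RInt_Rpower y u v hy hu hv)).
Qed.

Lemma gamma_int_chasles s a b c : 0 < a -> 0 < b -> 0 < c ->
  gamma_int s a b + gamma_int s b c = gamma_int s a c.
Proof. intros. apply (RInt_Chasles (V := R_CompleteNormedModule)); apply ex_RInt_gamma; auto. Qed.

Lemma gamma_int_nonneg s a b : 0 < a <= b -> 0 <= gamma_int s a b.
Proof.
  intros h. apply RInt_ge_0; [lra | apply ex_RInt_gamma; lra |].
  intros. left; apply gamma_integrand_pos.
Qed.

Lemma gamma_int_mono s a b a' b' : 0 < a' <= a -> a <= b -> b <= b' ->
  gamma_int s a b <= gamma_int s a' b'.
Proof.
  intros h1 h2 h3.
  rewrite <- (gamma_int_chasles s a' a b'), <- (gamma_int_chasles s a b b') by lra.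
  assert (0 <= gamma_int s a' a) by (apply gamma_int_nonneg; lra).
  assert (0 <= gamma_int s b b') by (apply gamma_int_nonneg; lra). lra.
Qed.

Lemma gamma_int_le_near0 s a : 0 < s -> 0 < a <= 1 -> gamma_int s a 1 <= 1 / s.
Proof.
  intros hs ha. eapply Rle_trans.
  - apply (RInt_le _ (fun t => 1 * Rpower t (s - 1))); try lra.
    + apply ex_RInt_gamma; lra.
    + apply ex_RInt_Rpower; lra.
    + intros x hx. unfold gamma_integrand. rewrite Rmult_1_l.
      assert (exp (- x) <= 1) by (rewrite <- exp_0; apply exp_monotone; lra).
      assert (0 < Rpower x (s - 1)) by apply Rpower_pos.
      nra.
  - rewrite RInt_Rpower, Rpower_one_l by lra.
    assert (0 < Rpower a s) by apply Rpower_pos.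
    unfold Rdiv. rewrite Rmult_1_l. apply Rmult_le_compat_r; [left; apply Rinv_0_lt_compat |]; lra.
Qed.

(* On [1, b] the integrand is at most (r + 2) ^ (r + 2) / t ^ 2, as t ^ (r + 2) <= (r + 2) ^ (r + 2) e ^ t. *)
Lemma gamma_int_le_far s r b : s <= INR r -> 1 <= b -> gamma_int s 1 b <= INR (r + 2) ^ (r + 2).
Proof.
  intros hs hb. set (K := INR (r + 2)).
  assert (hK : 0 < K) by (apply lt_0_INR; lia).
  eapply Rle_trans.
  - apply (RInt_le _ (fun t => K ^ (r + 2) * Rpower t (-1 - 1))); try lra.
    + apply ex_RInt_gamma; lra.
    + apply ex_RInt_Rpower; lra.
    + intros x hx. unfold gamma_integrand.
      assert (h1 : Rpower x (s - 1) <= x ^ r)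
        by (rewrite <- Rpower_pow by lra; apply Rle_Rpower; lra).
      assert (h2 : (x / K) ^ (r + 2) <= exp x) by (apply pow_div_le_exp; [lra | lia]).
      assert (hx2 : 0 < (x / K) ^ (r + 2)) by (apply pow_lt, Rdiv_lt_0_compat; lra).
      assert (h3 : exp (- x) <= / (x / K) ^ (r + 2))
        by (rewrite exp_Ropp; apply Rinv_le_contravar; auto).
      assert (h4 : Rpower x (-1 - 1) = / x ^ 2).
      { replace (-1 - 1) with (- INR 2) by (simpl; ring).
        rewrite Rpower_Ropp, Rpower_pow by lra. reflexivity. }
      assert (e : x ^ r * / (x / K) ^ (r + 2) = K ^ (r + 2) * / x ^ 2).
      { unfold Rdiv. rewrite Rpow_mult_distr, pow_add, pow_inv. field.
        repeat split; try lra; apply pow_nonzero; lra. }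
      assert (0 < Rpower x (s - 1)) by apply Rpower_pos.
      assert (0 < exp (- x)) by apply exp_pos.
      rewrite h4, <- e. apply Rmult_le_compat; lra.
  - rewrite RInt_Rpower, Rpower_one_l by lra.
    replace (Rpower b (-1)) with (/ b)
      by (replace (-1) with (- (1)) by ring; rewrite Rpower_Ropp, Rpower_1 by lra; reflexivity).
    assert (0 < K ^ (r + 2)) by (apply pow_lt; lra).
    assert (0 < / b) by (apply Rinv_0_lt_compat; lra).
    replace (K ^ (r + 2) * ((/ b - 1) / -1)) with (K ^ (r + 2) * (1 - / b)) by (field; lra).
    nra.
Qed.

Lemma gamma_int_bounded s r a b : 0 < s -> s <= INR r -> 0 < a <= b ->
  gamma_int s a b <= 1 / s + INR (r + 2) ^ (r + 2).
Proof.
  intros hs hsr hab.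
  assert (0 < Rmin a 1) by (apply Rmin_glb_lt; lra).
  assert (1 <= Rmax b 1) by apply Rmax_r.
  eapply Rle_trans; [apply (gamma_int_mono s a b (Rmin a 1) (Rmax b 1)) |].
  - split; [lra | apply Rmin_l].
  - lra.
  - apply Rmax_l.
  - rewrite <- (gamma_int_chasles s (Rmin a 1) 1 (Rmax b 1)) by lra.
    assert (gamma_int s (Rmin a 1) 1 <= 1 / s)
      by (apply gamma_int_le_near0; auto; split; [lra | apply Rmin_r]).
    assert (gamma_int s 1 (Rmax b 1) <= INR (r + 2) ^ (r + 2)) by (apply gamma_int_le_far; auto).
    lra.
Qed.

Lemma gamma_as_sup s r : 0 < s -> s <= INR r -> exists G, is_Gamma s G /\ 0 < G /\
  (forall a b, 0 < a <= b -> gamma_int s a b <= G) /\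
  (forall del, 0 < del -> exists a0 b0, 0 < a0 <= b0 /\ G - del < gamma_int s a0 b0).
Proof.
  intros hs hsr.
  set (E := fun y => exists a b, 0 < a <= b /\ y = gamma_int s a b).
  assert (hB : bound E).
  { exists (1 / s + INR (r + 2) ^ (r + 2)). intros y [a [b [hab ->]]].
    apply gamma_int_bounded; auto. }
  assert (hne : exists y, E y) by (exists (gamma_int s 1 1), 1, 1; split; [lra | reflexivity]).
  destruct (completeness E hB hne) as [G [HG1 HG2]].
  assert (Hup : forall a b, 0 < a <= b -> gamma_int s a b <= G)
    by (intros a b hab; apply HG1; exists a, b; auto).
  assert (Happ : forall del, 0 < del -> exists a0 b0, 0 < a0 <= b0 /\ G - del < gamma_int s a0 b0).
  { intros del hdel. apply Classical_Prop.NNPP. intro hn.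
    assert (hub : is_upper_bound E (G - del)).
    { intros y [a [b [hab ->]]]. apply Rnot_lt_le. intro hlt. apply hn. exists a, b; auto. }
    specialize (HG2 _ hub). lra. }
  exists G. repeat split; auto.
  - intros eps heps. destruct (Happ eps heps) as [a0 [b0 [hab0 hI]]].
    exists a0. split; [lra |]. exists b0. split; [lra |].
    intros a b ha had hMb hab.
    exists (ex_RInt_Reals_0 _ a b (ex_RInt_gamma s a b ltac:(lra) ltac:(lra))).
    rewrite <- RInt_Reals.
    change (RInt (fun t => Rpower t (s - 1) * exp (- t)) a b) with (gamma_int s a b).
    assert (gamma_int s a0 b0 <= gamma_int s a b) by (apply gamma_int_mono; lra).
    assert (gamma_int s a b <= G) by (apply Hup; lra).
    apply Rabs_def1; lra.
  - assert (0 < gamma_int s 1 2).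
    { apply RInt_gt_0; [lra | intros; apply gamma_integrand_pos |].
      intros x hx. apply (@ex_derive_continuous R_AbsRing R_NormedModule).
      unfold gamma_integrand, Rpower. auto_derive. lra. }
    assert (gamma_int s 1 2 <= G) by (apply Hup; lra). lra.
Qed.

(* Bound on the oscillation of [poisson_kernel r] over a cell [u, u + h] with a <= u. *)
Definition cell_ratio (r : nat) (a h : R) : R := exp (h * (INR r / a + 1)).

Lemma cell_ratio_ge1 r a h : 0 < a -> 0 <= h -> 1 <= cell_ratio r a h.
Proof.
  intros ha hh. unfold cell_ratio.
  assert (0 <= INR r / a) by (apply Rdiv_le_0_compat; [apply pos_INR | lra]).
  assert (0 <= h * (INR r / a + 1)) by (apply Rmult_le_pos; lra).
  generalize (exp_ineq1_le (h * (INR r / a + 1))). lra.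
Qed.

Lemma poisson_kernel_cell r a h u t : 0 < a <= u -> 0 <= h -> u <= t <= u + h ->
  poisson_kernel r u / cell_ratio r a h <= poisson_kernel r t <=
  cell_ratio r a h * poisson_kernel r u.
Proof.
  intros ha hh ht. unfold poisson_kernel, cell_ratio.
  assert (hra : 0 <= INR r / a) by (apply Rdiv_le_0_compat; [apply pos_INR | lra]).
  assert (0 <= u ^ r) by (apply pow_le; lra).
  assert (0 < exp (- u)) by apply exp_pos.
  assert (0 < exp (- t)) by apply exp_pos.
  split.
  - unfold Rdiv. rewrite <- exp_Ropp.
    assert (u ^ r <= t ^ r) by (apply pow_incr; lra).
    assert (exp (- u) * exp (- (h * (INR r / a + 1))) <= exp (- t))
      by (rewrite <- exp_plus; apply exp_monotone; nra).
    assert (0 < exp (- (h * (INR r / a + 1)))) by apply exp_pos.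
    rewrite Rmult_assoc. apply Rmult_le_compat; try lra. apply Rmult_le_pos; lra.
  - (* t <= u + h <= u e^(h / u) <= u e^(h / a) *)
    assert (e1 : t ^ r <= u ^ r * exp (h * (INR r / a))).
    { assert (t <= u * exp (h / a)).
      { assert (1 + h / u <= exp (h / u)) by apply exp_ineq1_le.
        assert (exp (h / u) <= exp (h / a)).
        { apply exp_monotone. unfold Rdiv. apply Rmult_le_compat_l; auto.
          apply Rinv_le_contravar; lra. }
        assert (u * (1 + h / u) = u + h) by (field; lra). nra. }
      replace (h * (INR r / a)) with (INR r * (h / a)) by (field; lra).
      rewrite <- exp_pow, <- Rpow_mult_distr. apply pow_incr; lra. }
    assert (e2 : exp (- t) <= exp (- u)) by (apply exp_monotone; lra).
    assert (1 <= exp h) by (generalize (exp_ineq1_le h); lra).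
    assert (0 < exp (h * (INR r / a))) by apply exp_pos.
    assert (0 <= t ^ r) by (apply pow_le; lra).
    replace (h * (INR r / a + 1)) with (h * (INR r / a) + h) by ring.
    rewrite exp_plus.
    apply Rle_trans with (u ^ r * exp (h * (INR r / a)) * exp (- u));
      [apply Rmult_le_compat; lra |].
    assert (0 <= u ^ r * exp (h * (INR r / a)) * exp (- u)) by (repeat apply Rmult_le_pos; lra).
    nra.
Qed.

Lemma gamma_integrand_kernel r alpha t : 0 < t ->
  gamma_integrand (INR r - alpha) t = poisson_kernel r t * Rpower t (- alpha - 1).
Proof.
  intros ht. unfold gamma_integrand, poisson_kernel.
  replace (INR r - alpha - 1) with (INR r + (- alpha - 1)) by ring.
  rewrite Rpower_plus, Rpower_pow by lra. ring.
Qed.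

Lemma gamma_int_cell r alpha a h u : 0 < a <= u -> 0 < h -> 0 < alpha ->
  let D := (Rpower u (- alpha) - Rpower (u + h) (- alpha)) / alpha in
  poisson_kernel r u / cell_ratio r a h * D <= gamma_int (INR r - alpha) u (u + h) <=
  cell_ratio r a h * poisson_kernel r u * D.
Proof.
  intros hu hh ha D.
  assert (0 < cell_ratio r a h) by apply exp_pos.
  assert (hD : forall c, c * D = RInt (fun t => c * Rpower t (- alpha - 1)) u (u + h)).
  { intros c. rewrite RInt_Rpower by lra. unfold D. field. lra. }
  assert (hK : forall x, u <= x <= u + h ->
    poisson_kernel r u / cell_ratio r a h * Rpower x (- alpha - 1) <= gamma_integrand (INR r - alpha) x
    <= cell_ratio r a h * poisson_kernel r u * Rpower x (- alpha - 1)).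
  { intros x hx. rewrite gamma_integrand_kernel by lra.
    destruct (poisson_kernel_cell r a h u x) as [h1 h2]; try lra.
    assert (0 < Rpower x (- alpha - 1)) by apply Rpower_pos.
    split; apply Rmult_le_compat_r; lra. }
  rewrite (hD (poisson_kernel r u / cell_ratio r a h)), (hD (cell_ratio r a h * poisson_kernel r u)).
  split; apply RInt_le; try lra.
  - apply ex_RInt_Rpower; lra.
  - apply ex_RInt_gamma; lra.
  - intros x hx. apply hK. lra.
  - apply ex_RInt_gamma; lra.
  - apply ex_RInt_Rpower; lra.
  - intros x hx. apply hK. lra.
Qed.

Lemma gamma_int_grid s a h m : 0 < a -> 0 < h ->
  gamma_int s a (a + INR m * h) =
  sum_lt (fun i => gamma_int s (a + INR i * h) (a + INR i * h + h)) m.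
Proof.
  intros ha hh. induction m; simpl sum_lt.
  - simpl INR. rewrite Rmult_0_l, Rplus_0_r. unfold gamma_int. rewrite RInt_point. reflexivity.
  - rewrite <- IHm, S_INR.
    assert (0 <= INR m * h) by (apply Rmult_le_pos; [apply pos_INR | lra]).
    rewrite gamma_int_chasles by lra. f_equal. ring.
Qed.

(* Riemann-Stieltjes sum of [poisson_kernel r] against d(- t ^ (- alpha)) on the grid a + i h. *)
Definition kernel_riemann_sum (r : nat) (alpha a h : R) (m : nat) : R :=
  sum_lt (fun i => poisson_kernel r (a + INR i * h) *
    (Rpower (a + INR i * h) (- alpha) - Rpower (a + INR (S i) * h) (- alpha))) m.

Lemma gamma_int_riemann_bounds r alpha a h m : 0 < a -> 0 < h -> 0 < alpha ->
  let S := kernel_riemann_sum r alpha a h m in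
  S / (cell_ratio r a h * alpha) <= gamma_int (INR r - alpha) a (a + INR m * h) <=
  cell_ratio r a h * S / alpha.
Proof.
  intros ha hh hal S. unfold S, kernel_riemann_sum. rewrite gamma_int_grid by auto.
  assert (0 < cell_ratio r a h) by apply exp_pos.
  split.
  - unfold Rdiv. rewrite Rmult_comm, <- sum_lt_scal. apply sum_lt_le. intros i _.
    assert (0 <= INR i * h) by (apply Rmult_le_pos; [apply pos_INR | lra]).
    rewrite S_INR, Rmult_plus_distr_r, Rmult_1_l, <- Rplus_assoc.
    eapply Rle_trans; [| apply (gamma_int_cell r alpha a h); lra].
    right. field. lra.
  - unfold Rdiv. rewrite Rmult_comm, <- Rmult_assoc, (Rmult_comm (/ alpha)), <- sum_lt_scal.
    apply sum_lt_le. intros i _.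
    assert (0 <= INR i * h) by (apply Rmult_le_pos; [apply pos_INR | lra]).
    rewrite S_INR, Rmult_plus_distr_r, Rmult_1_l, <- Rplus_assoc.
    eapply Rle_trans; [apply (gamma_int_cell r alpha a h); lra |].
    right. field. lra.
Qed.

Lemma INR_eventually_gt A : exists N, forall n, (N <= n)%nat -> A < INR n.
Proof.
  destruct (INR_unbounded A) as [N HN]. exists N. intros n hn.
  apply le_INR in hn. lra.
Qed.

Lemma Un_cv_const c : Un_cv (fun _ => c) c.
Proof. intros e he. exists O. intros. unfold Rdist. rewrite Rminus_diag, Rabs_R0. lra. Qed.

Lemma Un_cv_eventually_eq (u v : nat -> R) l :
  (exists N, forall n, (N <= n)%nat -> u n = v n) -> Un_cv u l -> Un_cv v l.
Proof.
  intros [N HN] Hu e he. destruct (Hu e he) as [N1 H1]. exists (Nat.max N N1).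
  intros n hn. rewrite <- HN by lia. apply H1; lia.
Qed.

(* B = 0 is excluded because A / 0 = 0 in Rocq. *)
Lemma ratio_near_one A B e : 0 <= A -> e < 1 -> Rabs (A / B - 1) < e ->
  0 < B /\ (1 - e) * B < A < (1 + e) * B.
Proof.
  intros hA he h. apply Rabs_def2 in h.
  assert (hB : 0 < B).
  { destruct (Rtotal_order B 0) as [hB | [hB | hB]]; auto.
    - assert (/ B < 0) by (apply Rinv_lt_0_compat; lra).
      assert (A / B <= 0) by (unfold Rdiv; nra). lra.
    - subst B. unfold Rdiv in h. rewrite Rinv_0, Rmult_0_r in h. lra. }
  split; [exact hB |].
  replace A with (A / B * B) by (field; lra). split; apply Rmult_lt_compat_r; lra.
Qed.

Lemma slowly_varying_cv l c : slowly_varying l -> 0 < c ->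
  Un_cv (fun n => l (c * INR n) / l (INR n)) 1.
Proof.
  intros hsv hc eps heps. destruct (hsv c hc eps heps) as [T HT].
  destruct (INR_eventually_gt T) as [N HN]. exists N. intros n hn. apply HT, HN. lia.
Qed.

Lemma Rpower_div_opp t y alpha : 0 < t -> 0 < y ->
  Rpower (t / y) (- alpha) = Rpower t (- alpha) * Rpower y alpha.
Proof.
  intros ht hy. unfold Rpower. rewrite ln_div by auto. rewrite <- exp_plus. f_equal. ring.
Qed.

Lemma Un_cv_div_INR c : Un_cv (fun n => c / INR n) 0.
Proof.
  intros e he. destruct (INR_eventually_gt (Rabs c / e)) as [N HN].
  exists (S N). intros n hn. unfold Rdist. rewrite Rminus_0_r.
  assert (hn' := HN n ltac:(lia)).
  assert (0 <= Rabs c) by apply Rabs_pos.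
  assert (hn0 : 0 < INR n) by (assert (0 <= Rabs c / e) by (apply Rdiv_le_0_compat; lra); lra).
  unfold Rdiv. rewrite Rabs_mult, Rabs_inv, (Rabs_right (INR n)) by lra.
  apply Rmult_lt_reg_r with (INR n); [lra |]. rewrite Rmult_assoc, Rinv_l by lra.
  assert (Rabs c / e * e = Rabs c) by (field; lra).
  assert (Rabs c / e * e < INR n * e) by (apply Rmult_lt_compat_r; lra). lra.
Qed.

Lemma Un_cv_pow u l k : Un_cv u l -> Un_cv (fun n => u n ^ k) (l ^ k).
Proof. intros H. induction k; simpl; [apply Un_cv_const | apply CV_mult; auto]. Qed.

Lemma Un_cv_exp u l : Un_cv u l -> Un_cv (fun n => exp (u n)) (exp l).
Proof. intros H. apply continuity_seq; auto. apply derivable_continuous_pt, derivable_pt_exp. Qed.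

Lemma Un_cv_sum_lt (F : nat -> nat -> R) (lim : nat -> R) m :
  (forall i, (i < m)%nat -> Un_cv (F i) (lim i)) ->
  Un_cv (fun n => sum_lt (fun i => F i n) m) (sum_lt lim m).
Proof.
  induction m; intros H; simpl; [apply Un_cv_const |].
  apply CV_plus; [apply IHm; intros; apply H; lia | apply H; lia].
Qed.

Lemma Un_cv_squeeze (x : nat -> R) c :
  (forall eps, 0 < eps -> exists (lo up : nat -> R) llo lup,
     Un_cv lo llo /\ Un_cv up lup /\ c - eps < llo /\ lup < c + eps /\
     exists N, forall n, (N <= n)%nat -> lo n <= x n <= up n) ->
  Un_cv x c.
Proof.
  intros H eps heps.
  destruct (H eps heps) as (lo & up & llo & lup & hlo & hup & h1 & h2 & N & HN).
  destruct (hlo (llo - (c - eps)) ltac:(lra)) as [N1 H1].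
  destruct (hup (c + eps - lup) ltac:(lra)) as [N2 H2].
  exists (Nat.max N (Nat.max N1 N2)). intros n hn.
  specialize (HN n ltac:(lia)). specialize (H1 n ltac:(lia)). specialize (H2 n ltac:(lia)).
  unfold Rdist in *. apply Rabs_def2 in H1. apply Rabs_def2 in H2. apply Rabs_def1; lra.
Qed.

Lemma infinite_sum_le (f : nat -> R) s U M0 : infinite_sum f s ->
  (forall M, (M0 <= M)%nat -> sum_lt f M <= U) -> s <= U.
Proof.
  intros HS HU. apply Rnot_lt_le. intro h.
  destruct (HS (s - U) ltac:(lra)) as [N HN].
  specialize (HN (Nat.max N M0) ltac:(lia)). unfold R_dist in HN. apply Rabs_def2 in HN.
  rewrite sum_f_R0_sum_lt in HN. specialize (HU (S (Nat.max N M0)) ltac:(lia)). lra.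
Qed.

Lemma sum_lt_le_infinite_sum (f : nat -> R) s M : infinite_sum f s -> (forall j, 0 <= f j) ->
  sum_lt f M <= s.
Proof.
  intros HS Hf. destruct M as [| M].
  - apply (Rle_trans _ (sum_f_R0 f 0)); [simpl; apply Hf | apply sum_incr; auto].
  - rewrite <- sum_f_R0_sum_lt. apply sum_incr; auto.
Qed.

(** * The counting function of a regularly varying sequence *)

Lemma potter_margin P : 1 <= P < 2 ->
  exists e, 0 < e < 1 /\ 0 <= P * (1 + e) ^ 2 / (1 - e) < 2.
Proof.
  intros hP. exists (Rmin (1 / 5) ((2 - P) / 16)).
  assert (he : 0 < Rmin (1 / 5) ((2 - P) / 16)) by (apply Rmin_glb_lt; lra).
  assert (he1 := Rmin_l (1 / 5) ((2 - P) / 16)).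
  assert (he2 := Rmin_r (1 / 5) ((2 - P) / 16)).
  set (e := Rmin (1 / 5) ((2 - P) / 16)) in *.
  split; [lra |]. split.
  - apply Rdiv_le_0_compat; [apply Rmult_le_pos; [lra | apply pow2_ge_0] | lra].
  - apply (Rmult_lt_reg_r (1 - e)); [lra |]. unfold Rdiv. rewrite Rmult_assoc, Rinv_l by lra.
    nra.
Qed.

Section Counting.

Variable p : nat -> R.
Variable cut : R -> nat.
Hypothesis cut_spec : forall x, 0 < x -> forall j, (cut x <= j)%nat -> p j < x.

Definition nu_bar (x : R) : R := INR (cnt p x (cut x)).

Lemma nu_bar_nonneg x : 0 <= nu_bar x.
Proof. apply pos_INR. Qed.

Lemma nubar_is_nu_bar x : 0 < x -> nubar_is p x (cnt p x (cut x)).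
Proof. intros hx. exists (cut x). split; auto. Qed.

Lemma cnt_eq_nu_bar x M : 0 < x -> (forall j, (M <= j)%nat -> p j < x) ->
  INR (cnt p x M) = nu_bar x.
Proof.
  intros hx H. unfold nu_bar.
  rewrite <- (cnt_stable p x M (Nat.max M (cut x))), <- (cnt_stable p x (cut x) (Nat.max M (cut x)));
    auto; lia.
Qed.

Lemma cnt_le_nu_bar x M : 0 < x -> INR (cnt p x M) <= nu_bar x.
Proof.
  intros hx. unfold nu_bar.
  rewrite <- (cnt_stable p x (cut x) (Nat.max M (cut x))) by (auto; lia).
  apply le_INR, cnt_mono; lia.
Qed.

Lemma cnt_eq_nu_bar_above x M y : 0 < x -> (cut x <= M)%nat -> x <= y ->
  INR (cnt p y M) = nu_bar y.
Proof.
  intros hx hM hxy. apply cnt_eq_nu_bar; [lra |].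
  intros j hj. assert (p j < x) by (apply cut_spec; auto; lia). lra.
Qed.

Definition tail_pow_sum (r : nat) (x : R) (M : nat) : R :=
  sum_lt (fun j => (1 - one_le x (p j)) * p j ^ r) M.

Lemma pow_half_le y r : 0 <= y -> (1 <= r)%nat -> (y / 2) ^ r <= y ^ r / 2.
Proof.
  intros hy hr. destruct r as [| r]; [lia |].
  replace (y ^ S r / 2) with (y / 2 * y ^ r) by (simpl; field).
  apply Rmult_le_compat_l; [lra |]. apply pow_incr; lra.
Qed.

Section TailSum.

Hypothesis hp : forall j, 0 <= p j <= 1.
Variables (r : nat) (x0 q : R).
Hypothesis hr : (1 <= r)%nat.
Hypothesis hq : 0 <= q < 2.
Hypothesis doubling : forall x, 0 < x <= x0 -> nu_bar (x / 2) <= q * nu_bar x.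

Let Q := 2 * q / (2 - q).

(* Split the jumps below y into those below y / 2 and those in [y / 2, y), then iterate K times. *)
Lemma tail_pow_sum_halving M K y : 0 < y <= x0 ->
  tail_pow_sum r y M <= Q * y ^ r * nu_bar y + INR M * (y / 2 ^ K) ^ r.
Proof.
  assert (hQ0 : 0 <= Q) by (apply Rdiv_le_0_compat; lra).
  assert (hQ : q * (Q / 2 + 1) = Q) by (unfold Q; field; lra).
  revert y. induction K as [| K IHK]; intros y hy.
  - simpl. replace (y / 1) with y by field.
    assert (tail_pow_sum r y M <= INR M * y ^ r).
    { unfold tail_pow_sum. rewrite <- sum_lt_const. apply sum_lt_le. intros j _.
      specialize (hp j). unfold one_le. destruct Rle_dec.
      - rewrite Rminus_diag, Rmult_0_l. apply pow_le; lra.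
      - rewrite Rminus_0_r, Rmult_1_l. apply pow_incr. lra. }
    assert (0 <= Q * y ^ r * nu_bar y)
      by (apply Rmult_le_pos; [apply Rmult_le_pos; [lra | apply pow_le; lra] | apply nu_bar_nonneg]).
    lra.
  - specialize (IHK (y / 2) ltac:(lra)).
    replace (y / 2 / 2 ^ K) with (y / 2 ^ S K) in IHK by (simpl; field; apply pow_nonzero; lra).
    assert (step : tail_pow_sum r y M <= tail_pow_sum r (y / 2) M + y ^ r * INR (cnt p (y / 2) M)).
    { unfold tail_pow_sum. rewrite INR_cnt, <- sum_lt_scal, <- sum_lt_add. apply sum_lt_le.
      intros j _. specialize (hp j).
      assert (0 <= p j ^ r) by (apply pow_le; lra).
      assert (0 <= y ^ r) by (apply pow_le; lra).
      unfold one_le. destruct (Rle_dec y (p j)); destruct (Rle_dec (y / 2) (p j)); try lra.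
      assert (p j ^ r <= y ^ r) by (apply pow_incr; lra). lra. }
    assert (c1 : INR (cnt p (y / 2) M) <= nu_bar (y / 2)) by (apply cnt_le_nu_bar; lra).
    assert (c2 := doubling y hy).
    assert (hyr : (y / 2) ^ r <= y ^ r / 2) by (apply pow_half_le; [lra | exact hr]).
    assert (0 <= y ^ r) by (apply pow_le; lra).
    assert (hn := nu_bar_nonneg y). assert (hn2 := nu_bar_nonneg (y / 2)).
    assert (t1 : Q * (y / 2) ^ r * nu_bar (y / 2) <= Q * (y ^ r / 2) * (q * nu_bar y)).
    { apply Rmult_le_compat; try (apply Rmult_le_pos; try apply pow_le; lra); try lra.
      apply Rmult_le_compat_l; lra. }
    assert (t2 : y ^ r * INR (cnt p (y / 2) M) <= y ^ r * (q * nu_bar y))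
      by (apply Rmult_le_compat_l; lra).
    assert (Q * (y ^ r / 2) * (q * nu_bar y) + y ^ r * (q * nu_bar y) = Q * y ^ r * nu_bar y)
      by (rewrite <- hQ at 2; field).
    lra.
Qed.

Lemma tail_pow_sum_le x M : 0 < x <= x0 -> x <= 1 ->
  tail_pow_sum r x M <= Q * x ^ r * nu_bar x.
Proof.
  intros hx hx1.
  apply Rnot_lt_le. intro hlt.
  set (del := tail_pow_sum r x M - Q * x ^ r * nu_bar x).
  destruct (cv_pow_half (INR M * x) del ltac:(unfold del; lra)) as [K HK].
  specialize (HK K (le_n K)). unfold Rdist in HK. rewrite Rminus_0_r in HK.
  assert (h2K : 0 < 2 ^ K) by (apply pow_lt; lra).
  assert (hxK : 0 <= x / 2 ^ K <= 1).
  { split; [apply Rdiv_le_0_compat; lra |].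
    apply (Rmult_le_reg_r (2 ^ K)); [lra |]. unfold Rdiv. rewrite Rmult_assoc, Rinv_l by lra.
    generalize (pow_R1_Rle 2 K ltac:(lra)). nra. }
  assert (hpow : (x / 2 ^ K) ^ r <= x / 2 ^ K).
  { destruct r as [| r']; [lia |]. simpl.
    assert ((x / 2 ^ K) ^ r' <= 1) by (apply pow_le_one; lra). nra. }
  assert (INR M * (x / 2 ^ K) ^ r <= INR M * x / 2 ^ K).
  { unfold Rdiv. rewrite Rmult_assoc. apply Rmult_le_compat_l; [apply pos_INR | exact hpow]. }
  assert (0 <= INR M * x / 2 ^ K) by (apply Rdiv_le_0_compat; [apply Rmult_le_pos; [apply pos_INR |] |]; lra).
  rewrite Rabs_right in HK by lra.
  assert (h := tail_pow_sum_halving M K x hx). unfold del in *. lra.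
Qed.

End TailSum.

Variables (alpha : R) (l : R -> R).
Hypothesis hrv : regularly_varying p alpha l.

Lemma rv_nu_bar eps : 0 < eps -> exists d, 0 < d /\ forall x, 0 < x < d ->
  Rabs (nu_bar x / (Rpower x (- alpha) * l (1 / x)) - 1) < eps.
Proof.
  intros he. destruct (proj2 hrv eps he) as [d [hd Hd]].
  exists d; split; auto. intros x hx. apply Hd; auto. apply nubar_is_nu_bar; lra.
Qed.

Lemma slowly_varying_eventually_pos : exists T, 0 < T /\ forall y, T < y -> 0 < l y.
Proof.
  destruct (rv_nu_bar (1 / 2) ltac:(lra)) as [d [hd Hd]].
  exists (1 / d). split; [apply Rdiv_lt_0_compat; lra |]. intros y hy.
  assert (hy0 : 0 < y) by (assert (0 < 1 / d) by (apply Rdiv_lt_0_compat; lra); lra).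
  assert (hx : 0 < 1 / y < d).
  { split; [apply Rdiv_lt_0_compat; lra |].
    apply (Rmult_lt_reg_r (y / d)); [apply Rdiv_lt_0_compat; lra |].
    replace (1 / y * (y / d)) with (1 / d) by (field; lra).
    replace (d * (y / d)) with y by (field; lra). lra. }
  destruct (ratio_near_one _ _ (1 / 2) (nu_bar_nonneg (1 / y)) ltac:(lra) (Hd _ hx)) as [hB _].
  replace (1 / (1 / y)) with y in hB by (field; lra).
  assert (0 < Rpower (1 / y) (- alpha)) by apply Rpower_pos. nra.
Qed.

Lemma nu_bar_scaled_cv t : 0 < t ->
  Un_cv (fun n => nu_bar (t / INR n) / (Rpower (INR n) alpha * l (INR n))) (Rpower t (- alpha)).
Proof.
  intros ht.
  set (A := fun n => nu_bar (t / INR n) / (Rpower (t / INR n) (- alpha) * l (/ t * INR n))).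
  set (B := fun n => l (/ t * INR n) / l (INR n)).
  assert (hA : Un_cv A 1).
  { intros eps heps. destruct (rv_nu_bar eps heps) as [d [hd Hd]].
    destruct (INR_eventually_gt (t / d)) as [N HN]. exists N. intros n hn.
    specialize (HN n hn).
    assert (hn0 : 0 < INR n) by (assert (0 < t / d) by (apply Rdiv_lt_0_compat; lra); lra).
    assert (hx : 0 < t / INR n < d).
    { split; [apply Rdiv_lt_0_compat; lra |].
      apply (Rmult_lt_reg_r (INR n / d)); [apply Rdiv_lt_0_compat; lra |].
      replace (t / INR n * (INR n / d)) with (t / d) by (field; lra).
      replace (d * (INR n / d)) with (INR n) by (field; lra). lra. }
    unfold A. replace (/ t * INR n) with (1 / (t / INR n)) by (field; lra). apply Hd, hx. }
  assert (hB : Un_cv B 1) by (apply slowly_varying_cv; [apply hrv | apply Rinv_0_lt_compat; lra]).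
  destruct slowly_varying_eventually_pos as [T [hT HT]].
  apply (Un_cv_eventually_eq (fun n => Rpower t (- alpha) * (A n * B n))).
  - destruct (INR_eventually_gt (Rmax T (t * T))) as [N HN]. exists N. intros n hn.
    specialize (HN n hn).
    assert (hn0 : T < INR n) by (eapply Rle_lt_trans; [apply Rmax_l | exact HN]).
    assert (hnt : T < / t * INR n).
    { apply (Rmult_lt_reg_l t); [lra |]. rewrite <- Rmult_assoc, Rinv_r, Rmult_1_l by lra.
      eapply Rle_lt_trans; [apply Rmax_r | exact HN]. }
    assert (0 < l (INR n)) by (apply HT; lra).
    assert (0 < l (/ t * INR n)) by (apply HT; lra).
    assert (0 < Rpower (INR n) alpha) by apply Rpower_pos.
    assert (0 < Rpower t (- alpha)) by apply Rpower_pos.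
    unfold A, B. rewrite Rpower_div_opp by lra. field. repeat split; lra.
  - assert (h := CV_mult _ _ _ _ (Un_cv_const (Rpower t (- alpha))) (CV_mult _ _ _ _ hA hB)).
    rewrite !Rmult_1_r in h. exact h.
Qed.

(* Potter-type bound: since 2 ^ alpha < 2, halving the level less than doubles the count. *)
Lemma nu_bar_doubling : 0 < alpha < 1 ->
  exists x0 q, 0 < x0 /\ 0 <= q < 2 /\ forall x, 0 < x <= x0 -> nu_bar (x / 2) <= q * nu_bar x.
Proof.
  intros ha.
  set (P := Rpower 2 alpha).
  assert (hP : P < 2) by (unfold P; rewrite <- (Rpower_1 2) at 2 by lra; apply Rpower_lt; lra).
  assert (hP1 : 1 <= P) by (unfold P; rewrite <- (Rpower_O 2) by lra; apply Rle_Rpower; lra).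
  destruct (potter_margin P) as (e & he & hq); [lra |].
  destruct (rv_nu_bar e ltac:(lra)) as [d [hd Hd]].
  destruct (proj1 hrv 2 ltac:(lra) e ltac:(lra)) as [T HT].
  set (x0 := Rmin (d / 2) (1 / (Rabs T + 1))).
  assert (hT := Rabs_pos T).
  assert (hx0 : 0 < x0) by (apply Rmin_glb_lt; apply Rdiv_lt_0_compat; lra).
  exists x0, (P * (1 + e) ^ 2 / (1 - e)). split; [exact hx0 | split; [exact hq |]].
  intros x hx.
  assert (hxd : x <= d / 2) by (eapply Rle_trans; [apply hx | apply Rmin_l]).
  assert (hxT : x <= 1 / (Rabs T + 1)) by (eapply Rle_trans; [apply hx | apply Rmin_r]).
  assert (hyT : T < 1 / x).
  { apply (Rle_lt_trans _ (Rabs T)); [apply Rle_abs |].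
    apply (Rmult_le_compat_r ((Rabs T + 1) / x)) in hxT; [| apply Rdiv_le_0_compat; lra].
    replace (x * ((Rabs T + 1) / x)) with (Rabs T + 1) in hxT by (field; lra).
    replace (1 / (Rabs T + 1) * ((Rabs T + 1) / x)) with (1 / x) in hxT by (field; lra). lra. }
  set (X := Rpower x (- alpha)).
  assert (hX : 0 < X) by apply Rpower_pos.
  destruct (ratio_near_one _ _ e (nu_bar_nonneg x) ltac:(lra) (Hd x ltac:(lra)))
    as [hB1 [hn1 _]].
  destruct (ratio_near_one _ _ e (nu_bar_nonneg (x / 2)) ltac:(lra) (Hd (x / 2) ltac:(lra)))
    as [hB2 [_ hn2]].
  replace (1 / (x / 2)) with (2 * (1 / x)) in hB2, hn2 by (field; lra).
  rewrite Rpower_div_opp in hB2, hn2 by lra. fold P X in hB2, hn2.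
  assert (hl1 : 0 < l (1 / x)) by (fold X in hB1; nra).
  assert (hl2 : 0 < l (2 * (1 / x))) by (assert (0 < X * P) by (apply Rmult_lt_0_compat; lra); nra).
  destruct (ratio_near_one _ _ e (Rlt_le _ _ hl2) ltac:(lra) (HT (1 / x) hyT)) as [_ [_ hl]].
  fold X in hn1.
  assert (nu_bar (x / 2) <= P * (1 + e) ^ 2 * (X * l (1 / x))).
  { assert (X * P * l (2 * (1 / x)) <= X * P * ((1 + e) * l (1 / x)))
      by (apply Rmult_le_compat_l; nra).
    simpl. nra. }
  assert (P * (1 + e) ^ 2 * ((1 - e) * (X * l (1 / x))) <= P * (1 + e) ^ 2 * nu_bar x)
    by (apply Rmult_le_compat_l; [apply Rmult_le_pos; [lra | apply pow2_ge_0] | lra]).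
  apply (Rmult_le_reg_l (1 - e)); [lra |].
  replace ((1 - e) * (P * (1 + e) ^ 2 / (1 - e) * nu_bar x)) with (P * (1 + e) ^ 2 * nu_bar x)
    by (field; lra).
  nra.
Qed.

End Counting.

(** * Step-function bounds on a grid *)

Definition cell (u : nat -> R) (i : nat) (q : R) : R := one_le (u i) q - one_le (u (S i)) q.

Lemma cell_sum_out u (B : nat -> R) m q : Un_growing u -> (q < u O \/ u m <= q) ->
  sum_lt (fun i => cell u i q * B i) m = 0.
Proof.
  intros Hu hq. rewrite <- (Rmult_0_r (INR m)), <- sum_lt_const.
  apply sum_lt_ext. intros i hi. unfold cell, one_le.
  assert (u O <= u i) by (apply tech9; auto; lia).
  assert (u (S i) <= u m) by (apply tech9; auto; lia).
  assert (u i <= u (S i)) by apply Hu.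
  destruct (Rle_dec (u i) q); destruct (Rle_dec (u (S i)) q); try lra; ring.
Qed.

Lemma cell_sum_select u (B : nat -> R) m q : Un_growing u -> u O <= q < u m ->
  exists i, (i < m)%nat /\ u i <= q < u (S i) /\ sum_lt (fun i => cell u i q * B i) m = B i.
Proof.
  intros Hu. induction m as [| m IH]; intros hq; [lra |].
  assert (u m <= u (S m)) by apply Hu.
  simpl sum_lt. destruct (Rle_dec (u m) q) as [h | h].
  - exists m. repeat split; try lra; try lia.
    rewrite cell_sum_out by (auto; lra). unfold cell, one_le.
    destruct (Rle_dec (u m) q); [| lra]. destruct (Rle_dec (u (S m)) q); [lra |]. ring.
  - destruct (IH ltac:(lra)) as [i [hi [hc hs]]].
    exists i. repeat split; try lra; try lia.
    rewrite hs. unfold cell, one_le.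
    destruct (Rle_dec (u m) q); [lra |]. destruct (Rle_dec (u (S m)) q); [lra |]. ring.
Qed.

Lemma sum_cells_cnt (p : nat -> R) u (B : nat -> R) m M :
  sum_lt (fun j => sum_lt (fun i => cell u i (p j) * B i) m) M =
  sum_lt (fun i => B i * (INR (cnt p (u i) M) - INR (cnt p (u (S i)) M))) m.
Proof.
  rewrite sum_lt_swap. apply sum_lt_ext. intros i _.
  rewrite !INR_cnt, <- sum_lt_sub, <- sum_lt_scal. apply sum_lt_ext. intros j _.
  unfold cell. ring.
Qed.

Section BinomialGrid.

Variables (r k m : nat) (a h : R).
Hypotheses (ha : 0 < a) (hh : 0 < h) (hkr : (0 < k + r)%nat).

Let N := INR (k + r).
Let b := a + INR m * h.
Let grid (i : nat) : R := (a + INR i * h) / N.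

Let N_pos : 0 < N.
Proof. apply lt_0_INR. exact hkr. Qed.

Lemma grid_growing : Un_growing grid.
Proof.
  intros i. unfold grid. rewrite S_INR. apply Rmult_le_compat_r.
  - left. apply Rinv_0_lt_compat, N_pos.
  - lra.
Qed.

Lemma grid_le_end i : (i <= m)%nat -> grid i <= b / N.
Proof.
  intros hi. unfold grid, b. apply Rmult_le_compat_r; [left; apply Rinv_0_lt_compat, N_pos |].
  apply le_INR in hi. nra.
Qed.

Lemma grid_cell_scaled i q : grid i <= q < grid (S i) ->
  a + INR i * h <= N * q < a + INR i * h + h.
Proof.
  unfold grid. rewrite S_INR. intros [h1 h2]. assert (hN := N_pos). split.
  - apply (Rmult_le_compat_l N) in h1; [| lra].
    replace (N * ((a + INR i * h) / N)) with (a + INR i * h) in h1 by (field; lra). exact h1.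
  - apply (Rmult_lt_compat_l N) in h2; [| lra].
    replace (N * ((a + (INR i + 1) * h) / N)) with (a + INR i * h + h) in h2 by (field; lra).
    exact h2.
Qed.

Lemma binom_pmf_le_step q : 0 <= q <= 1 -> (r <= k)%nat ->
  binom_pmf (k + r) r q <=
    (1 - one_le (a / N) q) * (N ^ r / INR (fact r) * q ^ r)
    + sum_lt (fun i => cell grid i q * (cell_ratio r a h * exp (b * INR r / N)
                         * poisson_kernel r (a + INR i * h) / INR (fact r))) m
    + one_le (b / N) q * (INR (2 * r + 2) ^ (r + 1) / (INR (fact r) * b)).
Proof.
  intros hq hrk. assert (hN := N_pos).
  assert (hmh : 0 <= INR m * h) by (apply Rmult_le_pos; [apply pos_INR | lra]).
  assert (hg0 : grid O = a / N) by (unfold grid; simpl; f_equal; ring).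
  assert (hab : a / N <= b / N) by (rewrite <- hg0; apply grid_le_end; lia).
  assert (0 <= binom_pmf (k + r) r q) by (apply binom_pmf_nonneg; auto).
  unfold one_le at 1 2.
  destruct (Rle_dec (a / N) q) as [h1 | h1]; destruct (Rle_dec (b / N) q) as [h2 | h2]; try lra.
  - rewrite cell_sum_out by (try apply grid_growing; right; exact h2).
    assert (hb : b <= N * q).
    { apply (Rmult_le_compat_l N) in h2; [| lra].
      replace (N * (b / N)) with b in h2 by (field; lra). exact h2. }
    rewrite Rminus_diag, Rmult_0_l, Rmult_1_l, !Rplus_0_l.
    apply binom_pmf_le_inv; auto. split; [unfold b | exact hb]; lra.
  - rewrite Rminus_diag, !Rmult_0_l, Rplus_0_l, Rplus_0_r.
    destruct (cell_sum_select grid (fun i => cell_ratio r a h * exp (b * INR r / N)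
                * poisson_kernel r (a + INR i * h) / INR (fact r)) m q grid_growing)
      as [i [hi [hc ->]]]; [rewrite hg0; change (grid m) with (b / N); lra |].
    destruct (grid_cell_scaled i q hc) as [ht1 ht2].
    assert (0 <= INR i * h) by (apply Rmult_le_pos; [apply pos_INR | lra]).
    destruct (poisson_kernel_cell r a h (a + INR i * h) (N * q)) as [_ hK]; try lra.
    assert (hE : exp (q * INR r) <= exp (b * INR r / N)).
    { apply exp_monotone. replace (b * INR r / N) with (b / N * INR r) by (field; lra).
      apply Rmult_le_compat_r; [apply pos_INR | lra]. }
    assert (0 <= poisson_kernel r (N * q)) by (apply poisson_kernel_nonneg; nra).
    assert (0 < / INR (fact r)) by (apply Rinv_0_lt_compat, INR_fact_lt_0).
    assert (0 < exp (q * INR r)) by apply exp_pos.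
    eapply Rle_trans; [apply binom_pmf_le_kernel; exact hq |]. fold N.
    unfold Rdiv.
    replace (cell_ratio r a h * exp (b * INR r * / N) * poisson_kernel r (a + INR i * h) * / INR (fact r))
      with (cell_ratio r a h * poisson_kernel r (a + INR i * h) * / INR (fact r) * exp (b * INR r * / N))
      by ring.
    apply Rmult_le_compat; try lra.
    + apply Rmult_le_pos; lra.
    + apply Rmult_le_compat_r; lra.
  - rewrite cell_sum_out by (try apply grid_growing; left; rewrite hg0; lra).
    rewrite Rminus_0_r, Rmult_1_l, Rmult_0_l, !Rplus_0_r.
    apply binom_pmf_le_pow. exact hq.
Qed.

Lemma cells_le_binom_pmf q : 0 <= q <= 1 -> 0 <= 1 - b ^ 2 / N ->
  sum_lt (fun i => cell grid i q * ((INR k / N) ^ r * (1 - b ^ 2 / N)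
                     * poisson_kernel r (a + INR i * h) / (cell_ratio r a h * INR (fact r)))) m
  <= binom_pmf (k + r) r q.
Proof.
  intros hq hlam. assert (hN := N_pos).
  assert (0 <= binom_pmf (k + r) r q) by (apply binom_pmf_nonneg; auto).
  destruct (Rlt_dec q (grid O)) as [h1 | h1];
    [rewrite cell_sum_out by (auto using grid_growing); lra |].
  destruct (Rlt_dec q (grid m)) as [h2 | h2];
    [| rewrite cell_sum_out by (try apply grid_growing; right; lra); lra].
  destruct (cell_sum_select grid (fun i => (INR k / N) ^ r * (1 - b ^ 2 / N)
              * poisson_kernel r (a + INR i * h) / (cell_ratio r a h * INR (fact r))) m q grid_growing)
    as [i [hi [hc ->]]]; [lra |].
  destruct (grid_cell_scaled i q hc) as [ht1 ht2].
  assert (0 <= INR i * h) by (apply Rmult_le_pos; [apply pos_INR | lra]).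
  assert (htb : N * q <= b).
  { assert (hSi : INR (S i) <= INR m) by (apply le_INR; lia).
    rewrite S_INR in hSi. unfold b. nra. }
  eapply Rle_trans; [| apply kernel_le_binom_pmf; auto]. fold N.
  destruct (poisson_kernel_cell r a h (a + INR i * h) (N * q)) as [hK _]; try lra.
  assert (hq2 : 1 - b ^ 2 / N <= 1 - N * q ^ 2).
  { replace (N * q ^ 2) with ((N * q) ^ 2 / N) by (field; lra).
    assert ((N * q) ^ 2 <= b ^ 2) by (apply pow_incr; lra).
    unfold Rdiv. apply Rplus_le_compat_l, Ropp_le_contravar, Rmult_le_compat_r;
      [left; apply Rinv_0_lt_compat |]; lra. }
  assert (hG : 0 <= poisson_kernel r (a + INR i * h)) by (apply poisson_kernel_nonneg; lra).
  assert (0 < cell_ratio r a h) by apply exp_pos.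
  assert (0 <= poisson_kernel r (a + INR i * h) / cell_ratio r a h) by (apply Rdiv_le_0_compat; lra).
  assert (hkN : 0 <= (INR k / N) ^ r) by (apply pow_le, Rdiv_le_0_compat; [apply pos_INR | lra]).
  assert (hf := INR_fact_lt_0 r).
  replace ((INR k / N) ^ r * (1 - b ^ 2 / N) * poisson_kernel r (a + INR i * h)
             / (cell_ratio r a h * INR (fact r)))
    with ((INR k / N) ^ r * ((1 - b ^ 2 / N) * (poisson_kernel r (a + INR i * h) / cell_ratio r a h))
            / INR (fact r)) by (field; lra).
  replace ((INR k / N) ^ r * (1 - N * q ^ 2) * poisson_kernel r (N * q) / INR (fact r))
    with ((INR k / N) ^ r * ((1 - N * q ^ 2) * poisson_kernel r (N * q)) / INR (fact r)) by (field; lra).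
  unfold Rdiv at 1 3. apply Rmult_le_compat_r; [left; apply Rinv_0_lt_compat; lra |].
  apply Rmult_le_compat_l; auto. apply Rmult_le_compat; lra.
Qed.

Variables (p : nat -> R) (cut : R -> nat).
Hypothesis cut_spec : forall x, 0 < x -> forall j, (cut x <= j)%nat -> p j < x.
Hypothesis hp : forall j, 0 <= p j <= 1.

Lemma cnt_grid_eq_nu_bar M i : (cut (a / N) <= M)%nat ->
  INR (cnt p (grid i) M) = nu_bar p cut (grid i).
Proof.
  intros hM. assert (hN := N_pos).
  apply (cnt_eq_nu_bar_above p cut cut_spec (a / N)); auto; [apply Rdiv_lt_0_compat; lra |].
  replace (a / N) with (grid O) by (unfold grid; simpl; f_equal; ring).
  apply tech9; [apply grid_growing | lia].
Qed.

Lemma binom_sum_le M x0 q : (1 <= r)%nat -> (r <= k)%nat -> 0 <= q < 2 ->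
  (forall x, 0 < x <= x0 -> nu_bar p cut (x / 2) <= q * nu_bar p cut x) ->
  a / N <= x0 -> a / N <= 1 -> (cut (a / N) <= M)%nat ->
  sum_lt (fun j => binom_pmf (k + r) r (p j)) M <=
    2 * q / (2 - q) * a ^ r / INR (fact r) * nu_bar p cut (a / N)
    + sum_lt (fun i => cell_ratio r a h * exp (b * INR r / N) * poisson_kernel r (a + INR i * h)
                 / INR (fact r) * (nu_bar p cut (grid i) - nu_bar p cut (grid (S i)))) m
    + INR (2 * r + 2) ^ (r + 1) / (INR (fact r) * b) * nu_bar p cut (b / N).
Proof.
  intros hr hrk hq hdbl hx0 hx1 hM. assert (hN := N_pos).
  assert (haN : 0 < a / N) by (apply Rdiv_lt_0_compat; lra).
  eapply Rle_trans; [apply sum_lt_le; intros j _; apply binom_pmf_le_step; auto |].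
  rewrite !sum_lt_add, sum_cells_cnt.
  apply Rplus_le_compat; [apply Rplus_le_compat |].
  - set (CN := N ^ r / INR (fact r)).
    assert (hCN : 0 <= CN) by (apply Rdiv_le_0_compat; [apply pow_le; lra | apply INR_fact_lt_0]).
    replace (sum_lt _ M) with (CN * tail_pow_sum p r (a / N) M)
      by (unfold tail_pow_sum; rewrite <- sum_lt_scal; apply sum_lt_ext; intros; ring).
    eapply Rle_trans;
      [apply Rmult_le_compat_l; [exact hCN | apply (tail_pow_sum_le p cut cut_spec hp r x0 q hr hq hdbl); lra] |].
    right. unfold CN, Rdiv. rewrite Rpow_mult_distr, pow_inv. field.
    repeat split; try lra; try apply INR_fact_neq_0; apply pow_nonzero; lra.
  - right. apply sum_lt_ext. intros i _.
    rewrite !cnt_grid_eq_nu_bar by exact hM. ring.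
  - right. change (b / N) with (grid m). rewrite <- (cnt_grid_eq_nu_bar M m hM), INR_cnt, <- sum_lt_scal.
    apply sum_lt_ext. intros. ring.
Qed.

Lemma binom_sum_ge M : (cut (a / N) <= M)%nat -> 0 <= 1 - b ^ 2 / N ->
  sum_lt (fun i => (INR k / N) ^ r * (1 - b ^ 2 / N) * poisson_kernel r (a + INR i * h)
             / (cell_ratio r a h * INR (fact r)) * (nu_bar p cut (grid i) - nu_bar p cut (grid (S i)))) m
  <= sum_lt (fun j => binom_pmf (k + r) r (p j)) M.
Proof.
  intros hM hlam.
  eapply Rle_trans; [| apply sum_lt_le; intros j _; apply cells_le_binom_pmf; auto].
  rewrite sum_cells_cnt. right. apply sum_lt_ext. intros i _.
  rewrite !cnt_grid_eq_nu_bar by exact hM. ring.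
Qed.

End BinomialGrid.

Lemma Rpower_small C beta delta : 0 <= C -> 0 < beta -> 0 < delta ->
  exists a1, 0 < a1 <= 1 /\ forall a, 0 < a <= a1 -> C * Rpower a beta < delta.
Proof.
  intros hC hb hd.
  set (d := delta / (C + 1)).
  assert (hd0 : 0 < d) by (apply Rdiv_lt_0_compat; lra).
  exists (Rmin 1 (Rpower d (/ beta))).
  assert (0 < Rpower d (/ beta)) by apply Rpower_pos.
  split; [split; [apply Rmin_glb_lt; lra | apply Rmin_l] |].
  intros a ha.
  assert (ha1 : a <= Rpower d (/ beta)) by (eapply Rle_trans; [apply ha | apply Rmin_r]).
  assert (Rpower a beta <= d).
  { eapply Rle_trans; [apply Rle_Rpower_l; [lra | split; [apply ha | exact ha1]] |].
    rewrite Rpower_mult, Rinv_l, Rpower_1 by lra. lra. }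
  assert (C * Rpower a beta <= C * d) by (apply Rmult_le_compat_l; lra).
  assert (C * d < delta) by (unfold d; apply (Rmult_lt_reg_r (C + 1)); [lra |];
    replace (C * (delta / (C + 1)) * (C + 1)) with (C * delta) by (field; lra); nra).
  lra.
Qed.

Lemma cell_ratio_fine r a L w : 0 < a -> 0 < L -> 0 < w ->
  exists m, (1 <= m)%nat /\ cell_ratio r a (L / INR m) ^ 2 <= 1 + w.
Proof.
  intros ha hL hw.
  assert (hl : 0 < ln (1 + w)) by (rewrite <- ln_1; apply ln_increasing; lra).
  assert (hra : 0 <= INR r / a) by (apply Rdiv_le_0_compat; [apply pos_INR | lra]).
  set (K := 2 * L * (INR r / a + 1)).
  assert (hK : 0 < K) by (unfold K; nra).
  destruct (INR_unbounded (K / ln (1 + w))) as [m Hm].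
  assert (hm0 : 0 < INR m) by (assert (0 < K / ln (1 + w)) by (apply Rdiv_lt_0_compat; lra); lra).
  exists m. split; [destruct m; [simpl in hm0; lra | lia] |].
  unfold cell_ratio. rewrite exp_pow, <- (exp_ln (1 + w)) by lra. apply exp_monotone.
  replace (INR 2 * (L / INR m * (INR r / a + 1))) with (K / INR m) by (simpl; unfold K; field; lra).
  apply (Rmult_le_reg_r (INR m)); [lra |].
  replace (K / INR m * INR m) with K by (field; lra).
  apply (Rmult_lt_compat_r (ln (1 + w))) in Hm; [| lra].
  replace (K / ln (1 + w) * ln (1 + w)) with K in Hm by (field; lra). lra.
Qed.

Lemma pow_mul_Rpower_opp_le a r alpha : 0 < a <= 1 -> (1 <= r)%nat ->
  a ^ r * Rpower a (- alpha) <= Rpower a (1 - alpha).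
Proof.
  intros ha hr.
  assert (har : a ^ r <= a).
  { destruct r as [| r']; [lia |]. simpl.
    assert (a ^ r' <= 1) by (apply pow_le_one; lra). nra. }
  replace (1 - alpha) with (1 + - alpha) by ring. rewrite Rpower_plus, Rpower_1 by lra.
  apply Rmult_le_compat_r; [left; apply Rpower_pos | exact har].
Qed.

Lemma tail_term_small K f b alpha delta : 0 <= K -> 0 < f -> 0 < delta -> 0 <= alpha ->
  1 <= b -> K / (f * delta) < b -> K / (f * b) * Rpower b (- alpha) < delta.
Proof.
  intros hK hf hd ha hb hKb.
  assert (Rpower b (- alpha) <= 1) by (rewrite <- (Rpower_O b) by lra; apply Rle_Rpower; lra).
  assert (0 < Rpower b (- alpha)) by apply Rpower_pos.
  assert (0 <= K / (f * b)) by (apply Rdiv_le_0_compat; [lra | apply Rmult_lt_0_compat; lra]).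
  assert (K / (f * b) < delta).
  { apply (Rmult_lt_reg_r (f * b)); [apply Rmult_lt_0_compat; lra |].
    apply (Rmult_lt_compat_r (f * delta)) in hKb; [| apply Rmult_lt_0_compat; lra].
    replace (K / (f * delta) * (f * delta)) with K in hKb by (field; lra).
    replace (K / (f * b) * (f * b)) with K by (field; lra). nra. }
  nra.
Qed.

Lemma ratio_sandwich_close S J th w c eps : 0 < eps -> 0 < w -> w * c <= eps / 4 ->
  1 <= th -> th ^ 2 <= 1 + w -> 0 <= J -> c - eps / 4 < J <= c -> S / th <= J <= th * S ->
  th * S <= c + eps / 4 /\ c - eps < S / th.
Proof.
  intros heps hw hwc hth hth2 hJ0 hJc [hJ1 hJ2].
  assert (hSJ : S <= th * J).
  { apply (Rmult_le_reg_r (/ th)); [apply Rinv_0_lt_compat; lra |].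
    replace (th * J * / th) with J by (field; lra). exact hJ1. }
  split.
  - assert (th * S <= th ^ 2 * J)
      by (simpl; rewrite Rmult_1_r, Rmult_assoc; apply Rmult_le_compat_l; lra).
    assert (th ^ 2 * J <= (1 + w) * J) by (apply Rmult_le_compat_r; lra).
    nra.
  - assert (J / th <= S)
      by (apply (Rmult_le_reg_r th); [lra |]; replace (J / th * th) with J by (field; lra); lra).
    assert (J / th ^ 2 <= S / th)
      by (replace (J / th ^ 2) with (J / th / th) by (field; lra);
          apply Rmult_le_compat_r; [left; apply Rinv_0_lt_compat |]; lra).
    assert (J / (1 + w) <= J / th ^ 2)
      by (apply Rmult_le_compat_l; [| apply Rinv_le_contravar; [nra |]]; lra).
    assert (c - eps < J / (1 + w)).
    { apply (Rmult_lt_reg_r (1 + w)); [lra |].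
      replace (J / (1 + w) * (1 + w)) with J by (field; lra). nra. }
    lra.
Qed.

Section ParameterChoice.

Variables (r : nat) (alpha G Q : R).
Hypotheses (hr : (1 <= r)%nat) (halpha : 0 < alpha < 1) (hQ : 0 <= Q) (hG : 0 < G).
Hypothesis hGup : forall a b, 0 < a <= b -> gamma_int (INR r - alpha) a b <= G.
Hypothesis hGapp : forall del, 0 < del ->
  exists a0 b0, 0 < a0 <= b0 /\ G - del < gamma_int (INR r - alpha) a0 b0.

Let fr := INR (fact r).
Let c := alpha * G / fr.

Lemma riemann_sum_near_gamma a h m : 0 < a -> 0 < h ->
  let S := kernel_riemann_sum r alpha a h m / fr in
  let J := alpha / fr * gamma_int (INR r - alpha) a (a + INR m * h) in
  S / cell_ratio r a h <= J <= cell_ratio r a h * S.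
Proof.
  intros ha hh S J.
  assert (hf : 0 < fr) by apply INR_fact_lt_0.
  assert (0 < cell_ratio r a h) by apply exp_pos.
  destruct (gamma_int_riemann_bounds r alpha a h m ha hh (proj1 halpha)) as [h1 h2].
  assert (hc : 0 < alpha / fr) by (apply Rdiv_lt_0_compat; lra).
  unfold J, S. split.
  - apply (Rmult_le_compat_l (alpha / fr)) in h1; [| lra].
    eapply Rle_trans; [| exact h1]. right. field. repeat split; lra.
  - apply (Rmult_le_compat_l (alpha / fr)) in h2; [| lra].
    eapply Rle_trans; [exact h2 |]. right. field. repeat split; lra.
Qed.

Lemma scaled_gamma_int_close a b a0 b0 eps : 0 < eps -> 0 < a <= a0 -> a0 <= b0 <= b ->
  G - eps * fr / (4 * alpha) < gamma_int (INR r - alpha) a0 b0 ->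
  c - eps / 4 < alpha / fr * gamma_int (INR r - alpha) a b <= c.
Proof.
  intros heps ha hb hI0.
  assert (hf : 0 < fr) by apply INR_fact_lt_0.
  assert (gamma_int (INR r - alpha) a0 b0 <= gamma_int (INR r - alpha) a b)
    by (apply gamma_int_mono; lra).
  assert (gamma_int (INR r - alpha) a b <= G) by (apply hGup; lra).
  assert (0 < alpha / fr) by (apply Rdiv_lt_0_compat; lra).
  unfold c. split.
  - replace (alpha * G / fr - eps / 4) with (alpha / fr * (G - eps * fr / (4 * alpha)))
      by (field; lra).
    apply Rmult_lt_compat_l; lra.
  - replace (alpha * G / fr) with (alpha / fr * G) by (field; lra).
    apply Rmult_le_compat_l; lra.
Qed.

Lemma head_term_le a : 0 < a <= 1 ->
  Q * a ^ r / fr * Rpower a (- alpha) <= Q / fr * Rpower a (1 - alpha).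
Proof.
  intros ha. assert (hf : 0 < fr) by apply INR_fact_lt_0.
  replace (Q * a ^ r / fr * Rpower a (- alpha)) with (Q / fr * (a ^ r * Rpower a (- alpha)))
    by (field; lra).
  apply Rmult_le_compat_l; [apply Rdiv_le_0_compat; lra | apply pow_mul_Rpower_opp_le; [lra | exact hr]].
Qed.

(* a small kills the jumps below a / n, b large kills those above b / n, and a fine grid on
   [a, b] makes the Riemann sum close to the truncated Gamma integral. *)
Lemma envelope_parameters eps : 0 < eps ->
  exists a h m, 0 < a <= 1 /\ 0 < h /\
  let b := a + INR m * h in
  let S := kernel_riemann_sum r alpha a h m / fr in
  Q * a ^ r / fr * Rpower a (- alpha) + cell_ratio r a h * S
    + INR (2 * r + 2) ^ (r + 1) / (fr * b) * Rpower b (- alpha) < c + eps /\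
  c - eps < S / cell_ratio r a h.
Proof.
  intros heps.
  assert (hf : 0 < fr) by apply INR_fact_lt_0.
  assert (hc : 0 < c) by (apply Rdiv_lt_0_compat; [apply Rmult_lt_0_compat |]; lra).
  destruct (hGapp (eps * fr / (4 * alpha))) as (a0 & b0 & hab0 & hI0);
    [apply Rdiv_lt_0_compat; nra |].
  destruct (Rpower_small (Q / fr) (1 - alpha) (eps / 4)) as (a1 & ha1 & Ha1);
    try lra; [apply Rdiv_le_0_compat; lra |].
  set (a := Rmin a0 a1).
  assert (ha : 0 < a <= a1) by (split; [apply Rmin_glb_lt; lra | apply Rmin_r]).
  assert (haa0 : a <= a0) by apply Rmin_l.
  set (Kb := INR (2 * r + 2) ^ (r + 1)).
  set (b := Rmax (Rmax b0 (a + 1)) (Kb / (fr * (eps / 4)) + 1)).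
  assert (hbb0 : b0 <= b) by (eapply Rle_trans; [apply Rmax_l | apply Rmax_l]).
  assert (hba : a + 1 <= b) by (eapply Rle_trans; [apply Rmax_r | apply Rmax_l]).
  assert (hbK : Kb / (fr * (eps / 4)) + 1 <= b) by apply Rmax_r.
  set (w := eps / (4 * (c + 1))).
  assert (hw : 0 < w) by (apply Rdiv_lt_0_compat; lra).
  assert (hwc : w * c <= eps / 4).
  { unfold w. apply (Rmult_le_reg_r (4 * (c + 1))); [lra |].
    replace (eps / (4 * (c + 1)) * c * (4 * (c + 1))) with (eps * c) by (field; lra). nra. }
  destruct (cell_ratio_fine r a (b - a) w) as (m & hm & Hm); try lra.
  assert (hm0 : 0 < INR m) by (apply lt_0_INR; lia).
  set (h := (b - a) / INR m) in Hm.
  assert (hh : 0 < h) by (apply Rdiv_lt_0_compat; lra).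
  assert (hbm : a + INR m * h = b) by (unfold h; field; lra).
  exists a, h, m. split; [split; lra | split; [exact hh |]].
  rewrite hbm. intros b' S. unfold b' in *. clear b'.
  assert (hJS := riemann_sum_near_gamma a h m (proj1 ha) hh). rewrite hbm in hJS.
  set (J := alpha / fr * gamma_int (INR r - alpha) a b) in hJS.
  assert (hJ0 : 0 <= J).
  { apply Rmult_le_pos; [apply Rdiv_le_0_compat; lra | apply gamma_int_nonneg; lra]. }
  assert (hJc : c - eps / 4 < J <= c) by (apply (scaled_gamma_int_close a b a0 b0); lra).
  destruct (ratio_sandwich_close S J (cell_ratio r a h) w c eps) as [hup hlo]; auto.
  { apply cell_ratio_ge1; lra. }
  split; [| exact hlo].
  assert (hhead := head_term_le a ltac:(lra)). specialize (Ha1 a ha).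
  assert (htail : Kb / (fr * b) * Rpower b (- alpha) < eps / 4)
    by (apply tail_term_small; try lra; apply pow_le, pos_INR).
  lra.
Qed.

End ParameterChoice.

(** * Upper and lower envelopes *)

Section Envelopes.

Variables (p : nat -> R) (alpha : R) (l : R -> R) (r : nat) (cut : R -> nat).
Hypothesis hp : forall j, 0 <= p j <= 1.
Hypothesis cut_spec : forall x, 0 < x -> forall j, (cut x <= j)%nat -> p j < x.
Hypothesis halpha : 0 < alpha < 1.
Hypothesis hrv : regularly_varying p alpha l.
Hypothesis hr : (1 <= r)%nat.
Variable EK : nat -> R.
Hypothesis hEK : forall n, infinite_sum (fun j => binom_pmf n r (p j)) (EK n).

Let L (y : R) : R := Rpower y alpha * l y.
Let rho (t : R) (n : nat) : R := nu_bar p cut (t / INR n) / L (INR n).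
Let fr := INR (fact r).

Lemma L_eventually_pos : exists N, forall n, (N <= n)%nat -> 0 < L (INR n).
Proof.
  destruct (slowly_varying_eventually_pos p cut cut_spec alpha l hrv) as (T & hT & HT).
  destruct (INR_eventually_gt T) as [N HN]. exists N. intros n hn.
  apply Rmult_lt_0_compat; [apply Rpower_pos | apply HT, HN, hn].
Qed.

Lemma rho_cv t : 0 < t -> Un_cv (rho t) (Rpower t (- alpha)).
Proof. apply nu_bar_scaled_cv; assumption. Qed.

Section EnvelopeGrid.

Variables (a h : R) (m : nat).
Hypotheses (ha : 0 < a <= 1) (hh : 0 < h).

Let b := a + INR m * h.
Let th := cell_ratio r a h.
Let riem (n : nat) : R := sum_lt (fun i => poisson_kernel r (a + INR i * h) / fr *
  (rho (a + INR i * h) n - rho (a + INR (S i) * h) n)) m.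

Let grid_pos i : 0 < a + INR i * h.
Proof. assert (0 <= INR i * h) by (apply Rmult_le_pos; [apply pos_INR | lra]). lra. Qed.

Lemma riem_cv : Un_cv riem (kernel_riemann_sum r alpha a h m / fr).
Proof.
  unfold kernel_riemann_sum, Rdiv. rewrite Rmult_comm, <- sum_lt_scal.
  apply Un_cv_sum_lt. intros i _.
  replace (/ fr * (poisson_kernel r (a + INR i * h) *
            (Rpower (a + INR i * h) (- alpha) - Rpower (a + INR (S i) * h) (- alpha))))
    with (poisson_kernel r (a + INR i * h) * / fr *
            (Rpower (a + INR i * h) (- alpha) - Rpower (a + INR (S i) * h) (- alpha))) by ring.
  apply CV_mult; [apply Un_cv_const | apply CV_minus; apply rho_cv, grid_pos].
Qed.

Lemma EK_le_upper_envelope x0 q : 0 < x0 -> 0 <= q < 2 ->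
  (forall x, 0 < x <= x0 -> nu_bar p cut (x / 2) <= q * nu_bar p cut x) ->
  exists N, forall n, (N <= n)%nat ->
    EK n / L (INR n) <= 2 * q / (2 - q) * a ^ r / fr * rho a n
      + th * exp (b * INR r / INR n) * riem n
      + INR (2 * r + 2) ^ (r + 1) / (fr * b) * rho b n.
Proof.
  intros hx0 hq hdbl.
  destruct L_eventually_pos as [N0 HN0].
  destruct (INR_eventually_gt (Rmax (2 * INR r) (a / x0))) as [N1 HN1].
  exists (Nat.max N0 N1). intros n hn.
  specialize (HN0 n ltac:(lia)). specialize (HN1 n ltac:(lia)).
  assert (h2r : 2 * INR r < INR n) by (eapply Rle_lt_trans; [apply Rmax_l | exact HN1]).
  assert (hax : a / x0 < INR n) by (eapply Rle_lt_trans; [apply Rmax_r | exact HN1]).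
  assert (hrn : (2 * r < n)%nat) by (apply INR_lt; rewrite mult_INR; simpl; lra).
  assert (hr1 : 1 <= INR r) by (apply (le_INR 1); exact hr).
  assert (hn0 : 0 < INR n) by lra.
  destruct (Nat.le_exists_sub r n) as (k & -> & _); [lia |].
  apply (Rmult_le_reg_r (L (INR (k + r)))); [exact HN0 |].
  replace (EK (k + r) / L (INR (k + r)) * L (INR (k + r))) with (EK (k + r)) by (field; lra).
  apply (infinite_sum_le _ _ _ (cut (a / INR (k + r))) (hEK (k + r))). intros M hM.
  eapply Rle_trans.
  { apply (binom_sum_le r k m a h (proj1 ha) hh ltac:(lia) p cut cut_spec hp M x0 q); auto; try lia.
    - apply (Rmult_le_reg_r (INR (k + r))); [lra |].
      unfold Rdiv. rewrite Rmult_assoc, Rinv_l by lra.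
      apply (Rmult_lt_compat_r x0) in hax; [| lra]. unfold Rdiv in hax.
      rewrite Rmult_assoc, Rinv_l in hax by lra. lra.
    - apply (Rmult_le_reg_r (INR (k + r))); [lra |].
      unfold Rdiv. rewrite Rmult_assoc, Rinv_l by lra. lra. }
  right. unfold riem, rho, th, b, fr. rewrite !Rmult_plus_distr_r.
  f_equal; [f_equal |].
  - field; repeat split; try apply INR_fact_neq_0; lra.
  - rewrite <- sum_lt_scal, (Rmult_comm _ (L (INR (k + r)))), <- sum_lt_scal.
    apply sum_lt_ext. intros i _.
    field; repeat split; try apply INR_fact_neq_0; lra.
  - assert (0 < a + INR m * h) by apply grid_pos.
    field; repeat split; try apply INR_fact_neq_0; lra.
Qed.

Lemma lower_envelope_le_EK : exists N, forall n, (N <= n)%nat ->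
  (1 - INR r / INR n) ^ r * (1 - b ^ 2 / INR n) / th * riem n <= EK n / L (INR n).
Proof.
  destruct L_eventually_pos as [N0 HN0].
  destruct (INR_eventually_gt (Rmax (b ^ 2) (INR r))) as [N1 HN1].
  exists (Nat.max N0 N1). intros n hn.
  specialize (HN0 n ltac:(lia)). specialize (HN1 n ltac:(lia)).
  assert (hb2 : b ^ 2 < INR n) by (eapply Rle_lt_trans; [apply Rmax_l | exact HN1]).
  assert (hrn : (r < n)%nat) by (apply INR_lt; eapply Rle_lt_trans; [apply Rmax_r | exact HN1]).
  assert (hn0 : 0 < INR n) by (apply lt_0_INR; lia).
  destruct (Nat.le_exists_sub r n) as (k & -> & _); [lia |].
  apply (Rmult_le_reg_r (L (INR (k + r)))); [exact HN0 |].
  replace (EK (k + r) / L (INR (k + r)) * L (INR (k + r))) with (EK (k + r)) by (field; lra).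
  eapply Rle_trans;
    [| apply (sum_lt_le_infinite_sum _ _ (cut (a / INR (k + r))) (hEK (k + r)));
       intros j; apply binom_pmf_nonneg, hp].
  eapply Rle_trans;
    [| apply (binom_sum_ge r k m a h (proj1 ha) hh ltac:(lia) p cut cut_spec hp); [lia |]].
  2:{ assert (b ^ 2 / INR (k + r) <= 1) by (apply (Rmult_le_reg_r (INR (k + r))); [lra |];
        unfold Rdiv; rewrite Rmult_assoc, Rinv_l by lra; lra).
      unfold b in *. lra. }
  right. unfold riem, rho, th, b, fr.
  replace (1 - INR r / INR (k + r)) with (INR k / INR (k + r)) by (rewrite plus_INR; field; rewrite <- plus_INR; lra).
  rewrite <- sum_lt_scal, (Rmult_comm _ (L (INR (k + r)))), <- sum_lt_scal.
  apply sum_lt_ext. intros i _.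
  assert (0 < cell_ratio r a h) by apply exp_pos.
  field; repeat split; try apply INR_fact_neq_0; lra.
Qed.

Lemma upper_envelope_cv Q : Un_cv
  (fun n => Q * a ^ r / fr * rho a n + th * exp (b * INR r / INR n) * riem n
            + INR (2 * r + 2) ^ (r + 1) / (fr * b) * rho b n)
  (Q * a ^ r / fr * Rpower a (- alpha) + th * (kernel_riemann_sum r alpha a h m / fr)
   + INR (2 * r + 2) ^ (r + 1) / (fr * b) * Rpower b (- alpha)).
Proof.
  assert (hb : 0 < b) by apply grid_pos.
  assert (he : Un_cv (fun n => th * exp (b * INR r / INR n)) th).
  { assert (h0 := CV_mult _ _ _ _ (Un_cv_const th) (Un_cv_exp _ _ (Un_cv_div_INR (b * INR r)))).
    rewrite exp_0, Rmult_1_r in h0. exact h0. }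
  apply CV_plus; [apply CV_plus |].
  - apply CV_mult; [apply Un_cv_const | apply rho_cv; lra].
  - apply CV_mult; [exact he | apply riem_cv].
  - apply CV_mult; [apply Un_cv_const | apply rho_cv; lra].
Qed.

Lemma lower_envelope_cv : Un_cv
  (fun n => (1 - INR r / INR n) ^ r * (1 - b ^ 2 / INR n) / th * riem n)
  (kernel_riemann_sum r alpha a h m / fr / th).
Proof.
  replace (kernel_riemann_sum r alpha a h m / fr / th)
    with ((1 - 0) ^ r * (1 - 0) / th * (kernel_riemann_sum r alpha a h m / fr))
    by (rewrite Rminus_0_r, pow1; unfold Rdiv; ring).
  apply CV_mult; [| apply riem_cv].
  unfold Rdiv at 3. apply CV_mult; [| apply Un_cv_const].
  apply CV_mult; [apply Un_cv_pow |]; apply CV_minus; try apply Un_cv_const; apply Un_cv_div_INR.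
Qed.

End EnvelopeGrid.

Lemma EK_over_L_cv G : 0 < G ->
  (forall a b, 0 < a <= b -> gamma_int (INR r - alpha) a b <= G) ->
  (forall del, 0 < del -> exists a0 b0, 0 < a0 <= b0 /\ G - del < gamma_int (INR r - alpha) a0 b0) ->
  Un_cv (fun n => EK n / L (INR n)) (alpha * G / fr).
Proof.
  intros hG hGup hGapp.
  destruct (nu_bar_doubling p cut cut_spec alpha l hrv halpha) as (x0 & q & hx0 & hq & hdbl).
  assert (hQ : 0 <= 2 * q / (2 - q)) by (apply Rdiv_le_0_compat; lra).
  apply Un_cv_squeeze. intros eps heps.
  destruct (envelope_parameters r alpha G _ hr halpha hQ hG hGup hGapp eps heps)
    as (a & h & m & ha & hh & hup & hlo).
  destruct (EK_le_upper_envelope a h m ha hh x0 q hx0 hq hdbl) as [N1 H1].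
  destruct (lower_envelope_le_EK a h m ha hh) as [N2 H2].
  eexists _, _, _, _. split; [eapply lower_envelope_cv; eauto |].
  split; [eapply upper_envelope_cv; eauto |].
  split; [exact hlo | split; [exact hup |]].
  exists (Nat.max N1 N2). intros n hn. split; [apply H2 | apply H1]; lia.
Qed.

End Envelopes.

Lemma binom_series_summable (p : nat -> R) r : (forall j, 0 <= p j <= 1) -> (1 <= r)%nat ->
  (exists S, infinite_sum p S) ->
  forall n, {e | infinite_sum (fun j => binom_pmf n r (p j)) e}.
Proof.
  intros hp hr hsum n.
  destruct (constructive_indefinite_description _ hsum) as [S0 HS0].
  set (K := INR n ^ r / INR (fact r)).
  assert (hK : 0 <= K) by (apply Rdiv_le_0_compat; [apply pow_le, pos_INR | apply INR_fact_lt_0]).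
  apply (Rseries_CV_comp _ (fun j => K * p j)).
  - intros j. specialize (hp j). split; [apply binom_pmf_nonneg; auto |].
    destruct (le_lt_dec r n) as [hrn | hrn]; [| rewrite binom_pmf_lt by exact hrn; nra].
    replace n with (n - r + r)%nat by lia.
    eapply Rle_trans; [apply binom_pmf_le_pow; auto |]. replace (n - r + r)%nat with n by lia.
    apply Rmult_le_compat_l; auto. destruct r as [| r]; [lia |]. simpl.
    assert (p j ^ r <= 1) by (apply pow_le_one; lra). nra.
  - exists (K * S0). apply (Un_cv_eventually_eq (fun N => K * sum_f_R0 p N)).
    + exists O. intros N _. rewrite scal_sum. apply sum_eq. intros; ring.
    + apply CV_mult; [apply Un_cv_const | exact HS0].
Qed.

Theorem theorem2 (p : nat -> R) (alpha : R) (l : R -> R) (r : nat)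
  (hp : forall j, 0 <= p j <= 1)
  (hsum : exists S, infinite_sum p S)
  (halpha : 0 < alpha < 1)
  (hrv : regularly_varying p alpha l)
  (hr : (1 <= r)%nat) :
  exists G, is_Gamma (INR r - alpha) G /\
  exists EK : nat -> R,
    (forall n, infinite_sum (fun j => binom_pmf n r (p j)) (EK n)) /\
    Un_cv (fun n => EK n /
             (alpha * G / INR (fact r) * Rpower (INR n) alpha * l (INR n))) 1.
Proof.
  assert (hr1 : 1 <= INR r) by (apply (le_INR 1); exact hr).
  destruct (gamma_as_sup (INR r - alpha) r) as (G & HG & hG & hGup & hGapp); [lra | lra |].
  exists G. split; [exact HG |].
  pose (HEK := binom_series_summable p r hp hr hsum).
  exists (fun n => proj1_sig (HEK n)). split; [intros n; exact (proj2_sig (HEK n)) |].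
  destruct (cutoff_exists p hsum) as [cut Hcut].
  set (c := alpha * G / INR (fact r)).
  assert (hc : 0 < c) by (apply Rdiv_lt_0_compat; [nra | apply INR_fact_lt_0]).
  assert (cv := EK_over_L_cv p alpha l r cut hp Hcut halpha hrv hr _ (fun n => proj2_sig (HEK n))
                  G hG hGup hGapp).
  destruct (L_eventually_pos p alpha l cut Hcut hrv) as [N HN].
  apply (Un_cv_eventually_eq (fun n => proj1_sig (HEK n) / (Rpower (INR n) alpha * l (INR n)) * / c)).
  - exists N. intros n hn. specialize (HN n hn).
    assert (0 < Rpower (INR n) alpha) by apply Rpower_pos.
    assert (0 < l (INR n)) by nra.
    unfold c. field. repeat split; try apply INR_fact_neq_0; nra.
  - replace 1 with (c * / c) by (field; lra). apply CV_mult; [exact cv | apply Un_cv_const].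
Qed.
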